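(* Let $p$ be an odd prime and $\ell\geq 1$ an integer. Then for every $\tau\in\mathbb{H}$, $$\prod_{j=0}^{\ell}\ \prod_{\substack{0\leq v<p^j\\ \gcd(p^{\ell-j},v,p^j)=1}}\theta_3\Big(\frac{p^{\ell-j}\tau+2v}{p^j}\Big)=\theta_3^{\psi(p^\ell)}(\tau).$$
   Context: $\mathbb{H}=\{\tau\in\mathbb{C}:\Im(\tau)>0\}$. For $\tau\in\mathbb{H}$, $\theta_3(\tau)=1+2\sum_{\nu=1}^{\infty}e^{\pi i\nu^2\tau}$. For a positive integer $n$, $\psi(n)=n\prod_{p\mid n}(1+1/p)$, the product over primes dividing $n$; in particular $\psi(p^\ell)=p^\ell+p^{\ell-1}$. *)

From Stdlib Require Import Reals Lra List Arith ZArith Znumtheory ClassicalEpsilon.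
Open Scope R_scope.

Definition Cplx : Type := (R * R)%type.
Definition Cre (z : Cplx) : R := fst z.
Definition Cim (z : Cplx) : R := snd z.
Definition C0 : Cplx := (0, 0).
Definition C1 : Cplx := (1, 0).
Definition Cadd (z w : Cplx) : Cplx := (fst z + fst w, snd z + snd w).
Definition Cmul (z w : Cplx) : Cplx :=
  (fst z * fst w - snd z * snd w, fst z * snd w + snd z * fst w).
Definition Cscal (r : R) (z : Cplx) : Cplx := (r * fst z, r * snd z).
Fixpoint Cpow (z : Cplx) (n : nat) : Cplx :=
  match n with O => C1 | S k => Cmul z (Cpow z k) end.
Definition Cprod_list (l : list Cplx) : Cplx := fold_right Cmul C1 l.

Definition Cexp (z : Cplx) : Cplx := (exp (fst z) * cos (snd z), exp (fst z) * sin (snd z)).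

Definition Cmul_i (z : Cplx) : Cplx := (- snd z, fst z).

(* Value of a real series (sum_{n>=0} u n), chosen by classical choice;
   it is the genuine limit whenever the series converges. *)
Definition series_val (u : nat -> R) : R :=
  epsilon (inhabits 0) (fun l => infinite_sum u l).

(* theta_3(tau) = 1 + 2 sum_{nu>=1} exp(pi i nu^2 tau). *)
Definition theta_term (tau : Cplx) (nu : nat) : Cplx :=
  Cexp (Cscal (PI * INR (nu * nu)) (Cmul_i tau)).

Definition theta3 (tau : Cplx) : Cplx :=
  Cadd C1 (Cscal 2 (series_val (fun n => fst (theta_term tau (S n))),
                    series_val (fun n => snd (theta_term tau (S n))))).

Definition theta_arg (p l j v : nat) (tau : Cplx) : Cplx :=
  Cscal (/ INR (p ^ j))
        (Cadd (Cscal (INR (p ^ (l - j))) tau) (INR (2 * v), 0)).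

Definition inner_prod (p l j : nat) (tau : Cplx) : Cplx :=
  Cprod_list
    (map (fun v => theta3 (theta_arg p l j v tau))
       (filter (fun v => Nat.eqb (Nat.gcd (Nat.gcd (p ^ (l - j)) v) (p ^ j)) 1)
          (seq 0 (p ^ j)))).

Definition outer_prod (p l : nat) (tau : Cplx) : Cplx :=
  Cprod_list (map (fun j => inner_prod p l j tau) (seq 0 (S l))).

(* Dedekind psi at a prime power: psi(p^l) = p^l + p^(l-1). *)
Definition psi_pp (p l : nat) : nat := (p ^ l + p ^ (l - 1))%nat.

(* The theta function is the limit of the finite Jacobi triple products
   [prod_(1 <= n <= N) (1 - q^(2n)) (1 + q^(2n-1))^2] in the nome [q = exp(pi i tau)]: expanding the product
   by the q-binomial theorem gives [sum_(|m| <= N) q^(m^2)] up to an error that is [O(N |q|^(2N-1))].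
   This product form shows that [theta3] does not vanish on the upper half-plane and, since
   [prod_(w < p) (1 - (zeta^w y)) = 1 - y^p] for a primitive [p]-th root of unity [zeta], it yields
   the level-[p] identity [theta3(p s) prod_(w < p) theta3((s + 2w)/p) = theta3(s)^(p+1)] for odd [p].
   Applied to every [(s + 2u)/p^j] this gives [F(j+1) theta3(p s) = F(j)^p theta3(s)] for the full
   products [F(j) = prod_(v < p^j) theta3((s + 2v)/p^j)], hence a closed form for [F(j)] in terms of
   [theta3(s)] and [theta3(p s)].  For [0 < j < l] the coprimality condition only removes the terms
   with [p | v], which make up [F(j-1)] one level further up, and the whole product telescopes. *)
From Pilot Require Import Defs.
From Stdlib Require Import Reals Lra Lia List Arith ZArith Znumtheory Field ClassicalEpsilon FunctionalExtensionality.
From mathcomp Require all_boot all_order all_algebra Rstruct complex.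
Open Scope R_scope.

(* [Reals] also exports a [C1]. *)
Notation C1 := Pilot.Defs.C1.
Notation C0 := Pilot.Defs.C0.

Definition Copp (z : Cplx) : Cplx := (- fst z, - snd z).
Definition Csub (z w : Cplx) : Cplx := Cadd z (Copp w).
Definition Cinv (z : Cplx) : Cplx :=
  (fst z / (fst z * fst z + snd z * snd z), - snd z / (fst z * fst z + snd z * snd z)).
Definition Cdiv (z w : Cplx) : Cplx := Cmul z (Cinv w).

Lemma C_ring_theory : ring_theory C0 C1 Cadd Cmul Csub Copp (@eq Cplx).
Proof.
  constructor; intros; unfold Cadd, Cmul, Csub, Copp, C0, C1;
    repeat match goal with z : Cplx |- _ => destruct z end; simpl; try reflexivity; f_equal; ring.
Qed.

Lemma C1_neq_C0 : C1 <> C0.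
Proof. unfold C1, C0; intro H; injection H; lra. Qed.

Lemma C_field_theory : field_theory C0 C1 Cadd Cmul Csub Copp Cdiv Cinv (@eq Cplx).
Proof.
  constructor; [exact C_ring_theory | exact C1_neq_C0 | reflexivity |].
  intros [x y] H. unfold Cinv, Cmul, C1; simpl.
  assert (Hn : x * x + y * y <> 0).
  { intro E. apply H. unfold C0. assert (x = 0) by nra. assert (y = 0) by nra. subst; reflexivity. }
  f_equal; field; exact Hn.
Qed.

Add Field C_field : C_field_theory.

Lemma Cmul_cancel_l a b c : a <> C0 -> Cmul a b = Cmul a c -> b = c.
Proof. intros Ha E. transitivity (Cdiv (Cmul a b) a); [field; auto|]. rewrite E. field; auto. Qed.

Lemma Cmul_neq0 a b : a <> C0 -> b <> C0 -> Cmul a b <> C0.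
Proof. intros Ha Hb E. apply Hb, (Cmul_cancel_l a); auto. rewrite E. field. Qed.

Lemma Cpow_add z m n : Cpow z (m + n) = Cmul (Cpow z m) (Cpow z n).
Proof. induction m; simpl; [field|]. rewrite IHm. field. Qed.

Lemma Cpow_mul z m n : Cpow z (m * n) = Cpow (Cpow z m) n.
Proof.
  induction n; simpl; [rewrite Nat.mul_0_r; reflexivity|].
  rewrite Nat.mul_succ_r, Cpow_add, IHn. field.
Qed.

Lemma Cpow_mult_distr a b n : Cpow (Cmul a b) n = Cmul (Cpow a n) (Cpow b n).
Proof. induction n; simpl; [field|]. rewrite IHn. field. Qed.

Lemma Cpow_1 z : Cpow z 1 = z.
Proof. simpl. field. Qed.

Lemma Cpow_C1 n : Cpow C1 n = C1.
Proof. induction n; simpl; [reflexivity|]. rewrite IHn. field. Qed.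

Lemma Cpow_neq0 x n : x <> C0 -> Cpow x n <> C0.
Proof. intros H. induction n; simpl; [exact C1_neq_C0 | now apply Cmul_neq0]. Qed.

Lemma Copp_pow_odd y n : Nat.odd n = true -> Cpow (Copp y) n = Copp (Cpow y n).
Proof.
  intros H. apply Nat.odd_spec in H. destruct H as [m ->].
  induction m; [simpl; field|].
  replace (2 * S m + 1)%nat with (2 + (2 * m + 1))%nat by lia.
  rewrite (Cpow_add (Copp y)), IHm, (Cpow_add y 2). cbn [Cpow]. field.
Qed.

Lemma Cexp_add a b : Cexp (Cadd a b) = Cmul (Cexp a) (Cexp b).
Proof.
  destruct a as [x y], b as [u v]; unfold Cexp, Cadd, Cmul; simpl.
  rewrite exp_plus, cos_plus, sin_plus. f_equal; ring.
Qed.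

Lemma Cexp_scal_nat z n : Cexp (Cscal (INR n) z) = Cpow (Cexp z) n.
Proof.
  induction n.
  - unfold Cexp, Cscal; simpl. rewrite !Rmult_0_l, exp_0, cos_0, sin_0.
    unfold C1; f_equal; ring.
  - simpl Cpow. rewrite <- IHn, <- Cexp_add. f_equal.
    unfold Cscal, Cadd; rewrite S_INR; simpl; f_equal; ring.
Qed.

Lemma Cexp_neq0 z : Cexp z <> C0.
Proof.
  destruct z as [x y]; unfold Cexp, C0; simpl; intro H; injection H; intros H1 H2.
  pose proof (exp_pos x). pose proof (sin2_cos2 y). unfold Rsqr in *.
  apply Rmult_integral in H1; apply Rmult_integral in H2. nra.
Qed.

Ltac sum_sq_nonneg := apply Rplus_le_le_0_compat; apply Rle_0_sqr.

Definition Cnorm (z : Cplx) : R := sqrt (fst z * fst z + snd z * snd z).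

Lemma Cnorm_ge0 z : 0 <= Cnorm z.
Proof. apply sqrt_pos. Qed.

Lemma Cnorm_C0 : Cnorm C0 = 0.
Proof. unfold Cnorm, C0; simpl. rewrite Rmult_0_l, Rplus_0_l. apply sqrt_0. Qed.

Lemma Cnorm_C1 : Cnorm C1 = 1.
Proof. unfold Cnorm, C1; simpl. rewrite Rmult_1_l, Rmult_0_l, Rplus_0_r. apply sqrt_1. Qed.

Lemma Cnorm_mul a b : Cnorm (Cmul a b) = Cnorm a * Cnorm b.
Proof.
  destruct a as [x y], b as [u v]; unfold Cnorm, Cmul; simpl.
  rewrite <- sqrt_mult_alt by sum_sq_nonneg. f_equal; ring.
Qed.

Lemma Cnorm_pow z n : Cnorm (Cpow z n) = Cnorm z ^ n.
Proof. induction n; simpl; [apply Cnorm_C1|]. rewrite Cnorm_mul, IHn. reflexivity. Qed.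

Lemma Cnorm_opp z : Cnorm (Copp z) = Cnorm z.
Proof. destruct z; unfold Cnorm, Copp; simpl; f_equal; ring. Qed.

Lemma Cnorm_triang a b : Cnorm (Cadd a b) <= Cnorm a + Cnorm b.
Proof.
  destruct a as [x y], b as [u v]; unfold Cnorm, Cadd; simpl.
  set (s1 := sqrt (x*x+y*y)). set (s2 := sqrt (u*u+v*v)).
  assert (H1 : s1 * s1 = x*x+y*y) by (apply sqrt_sqrt; sum_sq_nonneg).
  assert (H2 : s2 * s2 = u*u+v*v) by (apply sqrt_sqrt; sum_sq_nonneg).
  assert (P1 : 0 <= s1) by apply sqrt_pos. assert (P2 : 0 <= s2) by apply sqrt_pos.
  assert (Cauchy_Schwarz : x*u + y*v <= s1 * s2).
  { apply Rsqr_incr_0_var; [|nra]. unfold Rsqr.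
    replace (s1 * s2 * (s1 * s2)) with ((s1 * s1) * (s2 * s2)) by ring. rewrite H1, H2.
    pose proof (Rle_0_sqr (x*v-y*u)) as Hq; unfold Rsqr in Hq; nra. }
  apply Rsqr_incr_0_var; [|lra]. unfold Rsqr. rewrite sqrt_sqrt by sum_sq_nonneg. nra.
Qed.

Lemma Cnorm_triang_sub a b : Cnorm (Csub a b) <= Cnorm a + Cnorm b.
Proof. unfold Csub. rewrite <- (Cnorm_opp b). apply Cnorm_triang. Qed.

Lemma Cnorm_triang_rev a b : Cnorm a - Cnorm b <= Cnorm (Csub a b).
Proof.
  pose proof (Cnorm_triang (Csub a b) b) as H.
  replace (Cadd (Csub a b) b) with a in H by field. lra.
Qed.

Lemma Rabs_fst_le_Cnorm z : Rabs (fst z) <= Cnorm z.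
Proof.
  destruct z as [x y]; unfold Cnorm; simpl.
  rewrite <- sqrt_Rsqr_abs. apply sqrt_le_1_alt. unfold Rsqr; nra.
Qed.

Lemma Rabs_snd_le_Cnorm z : Rabs (snd z) <= Cnorm z.
Proof.
  destruct z as [x y]; unfold Cnorm; simpl.
  rewrite <- sqrt_Rsqr_abs. apply sqrt_le_1_alt. unfold Rsqr; nra.
Qed.

Lemma Cnorm_le_Rabs_sum z : Cnorm z <= Rabs (fst z) + Rabs (snd z).
Proof.
  destruct z as [x y]. replace (x, y) with (Cadd (x, 0) (0, y)) by (unfold Cadd; simpl; f_equal; ring).
  eapply Rle_trans; [apply Cnorm_triang|]. unfold Cnorm; simpl.
  replace (x*x+0*0) with (Rsqr x) by (unfold Rsqr; ring).
  replace (0*0+y*y) with (Rsqr y) by (unfold Rsqr; ring).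
  rewrite !sqrt_Rsqr_abs. unfold Cadd; simpl. rewrite Rplus_0_r, Rplus_0_l. lra.
Qed.

Lemma Cnorm_Cexp z : Cnorm (Cexp z) = exp (fst z).
Proof.
  destruct z as [x y]; unfold Cnorm, Cexp; simpl.
  replace (exp x * cos y * (exp x * cos y) + exp x * sin y * (exp x * sin y))
    with (exp x * exp x) by (pose proof (sin2_cos2 y); unfold Rsqr in *; nra).
  apply sqrt_square. left; apply exp_pos.
Qed.

Fixpoint Csum_list (l : list Cplx) : Cplx :=
  match l with nil => C0 | x :: r => Cadd x (Csum_list r) end.

Lemma Cprod_app l1 l2 : Cprod_list (l1 ++ l2) = Cmul (Cprod_list l1) (Cprod_list l2).
Proof. induction l1; simpl; [field|]. rewrite IHl1. field. Qed.

Lemma Csum_app l1 l2 : Csum_list (l1 ++ l2) = Cadd (Csum_list l1) (Csum_list l2).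
Proof. induction l1; simpl; [field|]. rewrite IHl1. field. Qed.

Lemma Cprod_map_ext {A} (f g : A -> Cplx) l :
  (forall x, In x l -> f x = g x) -> Cprod_list (map f l) = Cprod_list (map g l).
Proof. induction l; simpl; intros H; [reflexivity|]. rewrite H, IHl; auto. Qed.

Lemma Csum_map_ext {A} (f g : A -> Cplx) l :
  (forall x, In x l -> f x = g x) -> Csum_list (map f l) = Csum_list (map g l).
Proof. induction l; simpl; intros H; [reflexivity|]. rewrite H, IHl; auto. Qed.

Lemma Cprod_map_mul {A} (f g : A -> Cplx) l :
  Cprod_list (map (fun x => Cmul (f x) (g x)) l) =
  Cmul (Cprod_list (map f l)) (Cprod_list (map g l)).
Proof. induction l; simpl; [field|]. rewrite IHl. field. Qed.

Lemma Csum_map_add {A} (f g : A -> Cplx) l :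
  Csum_list (map (fun x => Cadd (f x) (g x)) l) = Cadd (Csum_list (map f l)) (Csum_list (map g l)).
Proof. induction l; simpl; [field|]. rewrite IHl. field. Qed.

Lemma Csum_map_sub {A} (f g : A -> Cplx) l :
  Csum_list (map (fun a => Csub (f a) (g a)) l) = Csub (Csum_list (map f l)) (Csum_list (map g l)).
Proof. induction l; simpl; [field|]. rewrite IHl. field. Qed.

Lemma Csum_map_scal {A} c (f : A -> Cplx) l :
  Csum_list (map (fun x => Cmul c (f x)) l) = Cmul c (Csum_list (map f l)).
Proof. induction l; simpl; [field|]. rewrite IHl. field. Qed.

Lemma Cprod_map_pow {A} (f : A -> Cplx) l n :
  Cprod_list (map (fun x => Cpow (f x) n) l) = Cpow (Cprod_list (map f l)) n.
Proof.
  induction l; simpl; [rewrite Cpow_C1; reflexivity|].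
  rewrite IHl, Cpow_mult_distr. reflexivity.
Qed.

Lemma Cprod_const {A} (c : Cplx) (l : list A) :
  Cprod_list (map (fun _ => c) l) = Cpow c (length l).
Proof. induction l; simpl; [reflexivity|]. rewrite IHl. reflexivity. Qed.

Lemma Cprod_swap {A B} (f : A -> B -> Cplx) la lb :
  Cprod_list (map (fun a => Cprod_list (map (fun b => f a b) lb)) la) =
  Cprod_list (map (fun b => Cprod_list (map (fun a => f a b) la)) lb).
Proof.
  induction la; simpl.
  - induction lb; simpl; [reflexivity|]. rewrite <- IHlb. field.
  - rewrite IHla, <- Cprod_map_mul. reflexivity.
Qed.

Lemma Cprod_neq0 l : (forall z, In z l -> z <> C0) -> Cprod_list l <> C0.
Proof.
  induction l; simpl; intros H; [exact C1_neq_C0|].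
  apply Cmul_neq0; auto.
Qed.

Lemma Cprod_filter {A} (g : A -> Cplx) (P : A -> bool) l :
  Cprod_list (map g (filter P l)) = Cprod_list (map (fun v => if P v then g v else C1) l).
Proof.
  induction l; simpl; [reflexivity|].
  destruct (P a); simpl; rewrite IHl; [reflexivity | field].
Qed.

Lemma Cprod_seq_S f a n :
  Cprod_list (map f (seq a (S n))) = Cmul (Cprod_list (map f (seq a n))) (f (a + n)%nat).
Proof. rewrite seq_S, map_app, Cprod_app. simpl. field. Qed.

Lemma Csum_seq_S f n :
  Csum_list (map f (seq 0 (S n))) = Cadd (Csum_list (map f (seq 0 n))) (f n).
Proof. rewrite seq_S, map_app, Csum_app. simpl. field. Qed.

Lemma Cprod_seq_shift f a n :
  Cprod_list (map f (seq a n)) = Cprod_list (map (fun i => f (a + i)%nat) (seq 0 n)).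
Proof.
  revert f; induction a; intros f; [reflexivity|].
  rewrite <- seq_shift, map_map, IHa. reflexivity.
Qed.

Lemma Cprod_seq_succ f n :
  Cprod_list (map f (seq 0 (S n))) = Cmul (f 0%nat) (Cprod_list (map (fun m => f (S m)) (seq 0 n))).
Proof. simpl. rewrite <- seq_shift, map_map. reflexivity. Qed.

Lemma Csum_seq_succ f n :
  Csum_list (map f (seq 0 (S n))) = Cadd (f 0%nat) (Csum_list (map (fun m => f (S m)) (seq 0 n))).
Proof. simpl. rewrite <- seq_shift, map_map. reflexivity. Qed.

Lemma Cprod_seq_add f a b :
  Cprod_list (map f (seq 0 (a + b))) =
  Cmul (Cprod_list (map f (seq 0 a))) (Cprod_list (map f (seq a b))).
Proof. rewrite seq_app, map_app, Cprod_app. reflexivity. Qed.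

Lemma Cprod_seq_rev f N :
  Cprod_list (map (fun k => f (N - 1 - k)%nat) (seq 0 N)) = Cprod_list (map f (seq 0 N)).
Proof.
  induction N; [reflexivity|].
  rewrite Cprod_seq_succ, (Cprod_map_ext _ (fun k => f (N - 1 - k)%nat)).
  2:{ intros k Hk. apply in_seq in Hk. f_equal. lia. }
  rewrite IHN, (Cprod_seq_S f 0 N). replace (S N - 1 - 0)%nat with N by lia. simpl. field.
Qed.

Lemma Cprod_seq_mul (f : nat -> Cplx) a b :
  Cprod_list (map f (seq 0 (a * b))) =
  Cprod_list (map (fun w => Cprod_list (map (fun u => f (a * w + u)%nat) (seq 0 a))) (seq 0 b)).
Proof.
  induction b; [rewrite Nat.mul_0_r; reflexivity|].
  replace (a * S b)%nat with (a * b + a)%nat by lia.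
  rewrite Cprod_seq_add, IHb, (Cprod_seq_S _ 0 b), (Cprod_seq_shift f (a * b) a). reflexivity.
Qed.

Lemma Cnorm_Cprod {A} (f : A -> Cplx) l :
  Cnorm (Cprod_list (map f l)) = fold_right Rmult 1 (map (fun k => Cnorm (f k)) l).
Proof. induction l; simpl; [apply Cnorm_C1|]. rewrite Cnorm_mul, IHl. reflexivity. Qed.

Lemma Cnorm_Csum_le (l : list Cplx) c :
  (forall z, In z l -> Cnorm z <= c) -> Cnorm (Csum_list l) <= INR (length l) * c.
Proof.
  induction l; intros H; simpl Csum_list; [rewrite Cnorm_C0; simpl; lra|].
  eapply Rle_trans; [apply Cnorm_triang|]. simpl length. rewrite S_INR.
  assert (Cnorm a <= c) by (apply H; left; auto).
  assert (Cnorm (Csum_list l) <= INR (length l) * c) by (apply IHl; intros; apply H; right; auto).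
  lra.
Qed.

Definition Ccv (u : nat -> Cplx) (l : Cplx) : Prop :=
  Un_cv (fun n => fst (u n)) (fst l) /\ Un_cv (fun n => snd (u n)) (snd l).

Lemma Ccv_const c : Ccv (fun _ => c) c.
Proof. split; intros e He; exists 0%nat; intros; unfold R_dist; rewrite Rminus_diag, Rabs_R0; lra. Qed.

Lemma Ccv_add u v a b : Ccv u a -> Ccv v b -> Ccv (fun n => Cadd (u n) (v n)) (Cadd a b).
Proof. intros [H1 H2] [H3 H4]; split; simpl; apply CV_plus; auto. Qed.

Lemma Ccv_mul u v a b : Ccv u a -> Ccv v b -> Ccv (fun n => Cmul (u n) (v n)) (Cmul a b).
Proof.
  intros [H1 H2] [H3 H4]; split; simpl.
  - apply CV_minus; apply CV_mult; auto.
  - apply CV_plus; apply CV_mult; auto.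
Qed.

Lemma Ccv_scal r u a : Ccv u a -> Ccv (fun n => Cscal r (u n)) (Cscal r a).
Proof. intros [H1 H2]; split; simpl; apply CV_mult; auto; apply (Ccv_const (r, r)). Qed.

Lemma Ccv_pow u a k : Ccv u a -> Ccv (fun n => Cpow (u n) k) (Cpow a k).
Proof. intros H; induction k; simpl; [apply Ccv_const | apply Ccv_mul; auto]. Qed.

Lemma Ccv_Cprod {A} (f : nat -> A -> Cplx) (g : A -> Cplx) l :
  (forall a, In a l -> Ccv (fun n => f n a) (g a)) ->
  Ccv (fun n => Cprod_list (map (f n) l)) (Cprod_list (map g l)).
Proof. induction l; simpl; intros H; [apply Ccv_const | apply Ccv_mul; auto]. Qed.

Lemma Ccv_unique u a b : Ccv u a -> Ccv u b -> a = b.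
Proof.
  intros [H1 H2] [H3 H4]. destruct a, b; simpl in *.
  f_equal; eapply UL_sequence; eauto.
Qed.

Lemma Ccv_ext u v a : (forall n, u n = v n) -> Ccv u a -> Ccv v a.
Proof.
  intros E [H1 H2]; split; intros e He;
    [destruct (H1 e He) as [N HN] | destruct (H2 e He) as [N HN]];
    exists N; intros n Hn; rewrite <- E; auto.
Qed.

Lemma Ccv_subseq u a (phi : nat -> nat) :
  (forall n, (n <= phi n)%nat) -> Ccv u a -> Ccv (fun n => u (phi n)) a.
Proof.
  intros Hphi [H1 H2]; split; intros e He;
    [destruct (H1 e He) as [N HN] | destruct (H2 e He) as [N HN]];
    exists N; intros n Hn; apply HN; specialize (Hphi n); lia.
Qed.

Lemma Ccv_Cnorm u a : Ccv u a <->
  forall e, 0 < e -> exists N, forall n, (N <= n)%nat -> Cnorm (Csub (u n) a) < e.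
Proof.
  split.
  - intros [H1 H2] e He.
    destruct (H1 (e/2)) as [N1 HN1]; [lra|]. destruct (H2 (e/2)) as [N2 HN2]; [lra|].
    exists (N1 + N2)%nat; intros n Hn. eapply Rle_lt_trans; [apply Cnorm_le_Rabs_sum|].
    specialize (HN1 n ltac:(lia)); specialize (HN2 n ltac:(lia)); unfold R_dist in *.
    destruct (u n), a; simpl in *. unfold Rminus in *. lra.
  - intros H; split; intros e He; destruct (H e He) as [N HN]; exists N; intros n Hn;
      specialize (HN n Hn); unfold R_dist.
    + pose proof (Rabs_fst_le_Cnorm (Csub (u n) a)). destruct (u n), a; simpl in *. unfold Rminus. lra.
    + pose proof (Rabs_snd_le_Cnorm (Csub (u n) a)). destruct (u n), a; simpl in *. unfold Rminus. lra.
Qed.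

Lemma Ccv_close u v a : Ccv u a ->
  (forall e, 0 < e -> exists N, forall n, (N <= n)%nat -> Cnorm (Csub (v n) (u n)) < e) ->
  Ccv v a.
Proof.
  intros Hu Hd. apply Ccv_Cnorm. intros e He.
  destruct (proj1 (Ccv_Cnorm u a) Hu (e/2)) as [N1 H1]; [lra|].
  destruct (Hd (e/2)) as [N2 H2]; [lra|].
  exists (N1 + N2)%nat; intros n Hn.
  replace (Csub (v n) a) with (Cadd (Csub (v n) (u n)) (Csub (u n) a)) by field.
  eapply Rle_lt_trans; [apply Cnorm_triang|].
  specialize (H1 n ltac:(lia)); specialize (H2 n ltac:(lia)). lra.
Qed.

Lemma Cnorm_lim_ge u a c : Ccv u a -> (forall n, c <= Cnorm (u n)) -> c <= Cnorm a.
Proof.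
  intros Hu Hc. destruct (Rle_dec c (Cnorm a)) as [h|h]; auto. exfalso.
  destruct (proj1 (Ccv_Cnorm u a) Hu (c - Cnorm a)) as [N HN]; [lra|].
  specialize (HN N (le_n _)). pose proof (Cnorm_triang_rev (u N) a). specialize (Hc N). lra.
Qed.

(** * [theta3] as a limit of partial sums of the nome *)

Definition nome (tau : Cplx) : Cplx := Cexp (Cscal PI (Cmul_i tau)).

Lemma theta_term_nome tau n : theta_term tau n = Cpow (nome tau) (n * n).
Proof.
  unfold theta_term, nome. rewrite <- Cexp_scal_nat. f_equal.
  unfold Cscal; simpl; f_equal; ring.
Qed.

Lemma nome_scal_nat n tau : nome (Cscal (INR n) tau) = Cpow (nome tau) n.
Proof.
  unfold nome. rewrite <- Cexp_scal_nat. f_equal.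
  destruct tau; unfold Cscal, Cmul_i; simpl. f_equal; ring.
Qed.

Lemma Cnorm_nome_lt1 tau : 0 < Cim tau -> Cnorm (nome tau) < 1.
Proof.
  intros H. unfold nome. rewrite Cnorm_Cexp, <- exp_0. apply exp_increasing.
  unfold Cim in H. simpl. pose proof PI_RGT_0. nra.
Qed.

Lemma theta3_nome tau tau' : nome tau = nome tau' -> theta3 tau = theta3 tau'.
Proof.
  intros H. unfold theta3.
  replace (theta_term tau) with (theta_term tau'); [reflexivity|].
  apply functional_extensionality; intros n. rewrite !theta_term_nome, H. reflexivity.
Qed.

Lemma theta3_shift_even tau w : theta3 (Cadd tau (INR (2 * w), 0)) = theta3 tau.
Proof.
  apply theta3_nome. unfold nome.
  replace (Cscal PI (Cmul_i (Cadd tau (INR (2 * w), 0))))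
    with (Cadd (Cscal PI (Cmul_i tau)) (0, 0 + 2 * INR w * PI)).
  2:{ rewrite mult_INR. destruct tau; unfold Cscal, Cmul_i, Cadd; simpl. f_equal; ring. }
  rewrite Cexp_add. unfold Cexp at 2. simpl fst; simpl snd.
  rewrite exp_0, cos_period, sin_period, cos_0, sin_0.
  destruct (Cexp (Cscal PI (Cmul_i tau))). unfold Cmul; simpl. f_equal; ring.
Qed.

(* [theta_partial x N] stops at the term [x^((N+1)^2)]. *)
Definition theta_partial (x : Cplx) (N : nat) : Cplx :=
  Cadd C1 (Cscal 2 (Csum_list (map (fun n => Cpow x (S n * S n)) (seq 0 (S N))))).

Lemma Csum_seq_components f N :
  Csum_list (map f (seq 0 (S N))) =
  (sum_f_R0 (fun n => fst (f n)) N, sum_f_R0 (fun n => snd (f n)) N).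
Proof.
  induction N; [simpl; destruct (f 0%nat); simpl; f_equal; ring|].
  rewrite Csum_seq_S, IHN. simpl. reflexivity.
Qed.

Lemma infinite_sum_series_val (u : nat -> R) (r : R) :
  0 <= r < 1 -> (forall n, Rabs (u n) <= r ^ n) -> infinite_sum u (series_val u).
Proof.
  intros Hr Hu. unfold series_val. apply epsilon_spec.
  assert (Hgeom : {l | Un_cv (fun N => sum_f_R0 (fun n => r ^ n) N) l}).
  { exists (/ (1 - r)). intros e He.
    destruct (GP_infinite r ltac:(rewrite Rabs_pos_eq; lra) e He) as [N HN].
    exists N. intros n Hn. specialize (HN n Hn). unfold R_dist in *.
    erewrite sum_eq; [exact HN|]. intros; cbv beta; ring. }
  destruct (Rseries_CV_comp (fun n => Rabs (u n)) (fun n => r ^ n)) as [l Hl];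
    [intros n; split; [apply Rabs_pos | auto] | exact Hgeom |].
  destruct (cv_cauchy_2 u) as [l' Hl'];
    [apply cauchy_abs, cv_cauchy_1; exists l; exact Hl |].
  exists l'. exact Hl'.
Qed.

Lemma pow_le_pow_le1 r a b : 0 <= r <= 1 -> (b <= a)%nat -> r ^ a <= r ^ b.
Proof.
  intros H Hab. replace a with (b + (a - b))%nat by lia. rewrite pow_add.
  assert (0 <= r ^ b) by (apply pow_le; lra).
  assert (r ^ (a - b) <= 1) by (rewrite <- (pow1 (a - b)); apply pow_incr; lra).
  nra.
Qed.

Lemma theta_partial_cv tau : 0 < Cim tau -> Ccv (theta_partial (nome tau)) (theta3 tau).
Proof.
  intros H. set (r := Cnorm (nome tau)).
  assert (Hr : 0 <= r < 1) by (split; [apply Cnorm_ge0 | apply Cnorm_nome_lt1; auto]).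
  assert (Hterm : forall n, Cnorm (theta_term tau (S n)) <= r ^ n).
  { intros n. rewrite theta_term_nome, Cnorm_pow. apply pow_le_pow_le1; [lra | nia]. }
  pose proof (infinite_sum_series_val (fun n => fst (theta_term tau (S n))) r Hr
    (fun n => Rle_trans _ _ _ (Rabs_fst_le_Cnorm _) (Hterm n))) as S1.
  pose proof (infinite_sum_series_val (fun n => snd (theta_term tau (S n))) r Hr
    (fun n => Rle_trans _ _ _ (Rabs_snd_le_Cnorm _) (Hterm n))) as S2.
  apply Ccv_add; [apply Ccv_const|]. apply Ccv_scal.
  eapply Ccv_ext; [intros N; symmetry; apply Csum_seq_components|].
  split; simpl; intros e He; [destruct (S1 e He) as [N HN] | destruct (S2 e He) as [N HN]];
    exists N; intros n Hn;
    erewrite sum_eq; try apply HN; auto; intros i _; cbv beta; rewrite theta_term_nome; reflexivity.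
Qed.

(** * The q-binomial theorem and the finite Jacobi triple product *)

Fixpoint qbinom (q : Cplx) (n m : nat) : Cplx :=
  match n, m with
  | O, O => C1
  | O, S _ => C0
  | S _, O => C1
  | S n', S m' => Cadd (qbinom q n' m') (Cmul (Cpow q (S m')) (qbinom q n' (S m')))
  end.

Lemma qbinom_gt q n m : (n < m)%nat -> qbinom q n m = C0.
Proof.
  revert m; induction n; intros m H; destruct m; simpl; try lia; auto.
  rewrite !IHn by lia. field.
Qed.

Lemma qbinom_n0 q n : qbinom q n 0 = C1.
Proof. destruct n; reflexivity. Qed.

Fixpoint tri (n : nat) : nat := match n with O => O | S k => (tri k + k)%nat end.

Lemma tri_double m : (2 * tri m + m = m * m)%nat.
Proof. induction m; simpl; lia. Qed.

Theorem q_binomial q u n : forall w,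
  Cprod_list (map (fun k => Cadd u (Cmul (Cpow q k) w)) (seq 0 n)) =
  Csum_list (map (fun m => Cmul (Cmul (Cmul (qbinom q n m) (Cpow q (tri m))) (Cpow w m)) (Cpow u (n - m)))
    (seq 0 (S n))).
Proof.
  induction n; intros w; [simpl; field|].
  rewrite Cprod_seq_succ, (Cprod_map_ext _ (fun k => Cadd u (Cmul (Cpow q k) (Cmul q w)))).
  2:{ intros k _. simpl. f_equal. field. }
  rewrite IHn.
  set (h := fun m => Cmul (Cmul (Cmul (qbinom q n m) (Cpow q (tri m))) (Cpow (Cmul q w) m)) (Cpow u (n - m))).
  set (g := fun m => Cmul (Cmul (Cmul (qbinom q (S n) m) (Cpow q (tri m))) (Cpow w m)) (Cpow u (S n - m))).
  (* q-Pascal: each coefficient of the product splits between the two factors *)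
  rewrite (Csum_seq_succ g (S n)),
    (Csum_map_ext (fun m => g (S m)) (fun m => Cadd (Cmul w (h m)) (Cmul u (h (S m))))).
  2:{ intros m Hm. apply in_seq in Hm. unfold h, g.
      simpl qbinom. simpl tri. rewrite Cpow_add, !Cpow_mult_distr.
      replace (S n - S m)%nat with (n - m)%nat by lia.
      destruct (Nat.eq_dec m n) as [->|Hne].
      - rewrite (qbinom_gt q n (S n)), Nat.sub_diag by lia. simpl. field.
      - replace (n - m)%nat with (S (n - S m)) by lia. simpl. field. }
  rewrite Csum_map_add, !Csum_map_scal, (Csum_seq_S (fun m => h (S m))), (Csum_seq_succ h n).
  assert (E0 : h 0%nat = Cpow u n) by (unfold h; rewrite qbinom_n0, Nat.sub_0_r; simpl; field).
  assert (E1 : h (S n) = C0) by (unfold h; rewrite (qbinom_gt q n (S n)) by lia; field).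
  assert (E2 : g 0%nat = Cpow u (S n)) by (unfold g; rewrite qbinom_n0, Nat.sub_0_r; simpl; field).
  rewrite E0, E1, E2. simpl Cpow. field.
Qed.

Definition qpoch (q : Cplx) (n : nat) : Cplx :=
  Cprod_list (map (fun k => Csub C1 (Cpow q (S k))) (seq 0 n)).

Lemma qpoch_S q n : qpoch q (S n) = Cmul (qpoch q n) (Csub C1 (Cpow q (S n))).
Proof. apply Cprod_seq_S. Qed.

Lemma qbinom_qpoch q n : forall m, (m <= n)%nat ->
  Cmul (Cmul (qbinom q n m) (qpoch q m)) (qpoch q (n - m)) = qpoch q n.
Proof.
  induction n; intros m Hm.
  - destruct m; [|lia]. simpl. unfold qpoch; simpl. field.
  - destruct m as [|m].
    + rewrite qbinom_n0, Nat.sub_0_r. unfold qpoch at 1. simpl. field.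
    + cbn [qbinom]. replace (S n - S m)%nat with (n - m)%nat by lia.
      destruct (Nat.eq_dec m n) as [->|Hne].
      * pose proof (IHn n (le_n _)) as H. rewrite Nat.sub_diag in *.
        change (qpoch q 0) with C1 in *. rewrite (qbinom_gt q n (S n)), qpoch_S by lia.
        transitivity (Cmul (Cmul (Cmul (qbinom q n n) (qpoch q n)) C1) (Csub C1 (Cpow q (S n))));
          [field | now rewrite H].
      * pose proof (IHn m ltac:(lia)) as H1. pose proof (IHn (S m) ltac:(lia)) as H2.
        replace (n - m)%nat with (S (n - S m)) in * by lia.
        rewrite !qpoch_S. rewrite qpoch_S in H1, H2.
        assert (E : Cpow q (S n) = Cmul (Cpow q (S m)) (Cpow q (S (n - S m))))
          by (rewrite <- Cpow_add; f_equal; lia).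
        set (x := Cpow q (S m)) in *. set (y := Cpow q (S (n - S m))) in *.
        transitivity
          (Cadd (Cmul (Cmul (Cmul (qbinom q n m) (qpoch q m)) (Cmul (qpoch q (n - S m)) (Csub C1 y))) (Csub C1 x))
                (Cmul x (Cmul (Cmul (Cmul (qbinom q n (S m)) (Cmul (qpoch q m) (Csub C1 x))) (qpoch q (n - S m))) (Csub C1 y))));
          [field|].
        rewrite H1, H2, E. field.
Qed.

Definition absdiff (m N : nat) : nat := (m - N + (N - m))%nat.

Definition odd_qpoch (x : Cplx) (N : nat) : Cplx :=
  Cprod_list (map (fun i => Cadd C1 (Cpow x (2 * i + 1))) (seq 0 N)).

Lemma Cprod_pow_even x N : Cprod_list (map (fun k => Cpow x (2 * k)) (seq 0 N)) = Cpow x (2 * tri N).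
Proof.
  induction N; [reflexivity|].
  rewrite (Cprod_seq_S _ 0), IHN, <- Cpow_add. f_equal. simpl. lia.
Qed.

Lemma Cprod_pair_odd x N : (1 <= N)%nat ->
  Cprod_list (map (fun k => Cadd (Cpow x (2 * N - 1)) (Cmul (Cpow (Cpow x 2) k) C1)) (seq 0 (2 * N))) =
  Cmul (Cpow x (2 * tri N + (2 * N - 1) * N)) (Cmul (odd_qpoch x N) (odd_qpoch x N)).
Proof.
  intros HN. replace (seq 0 (2 * N)) with (seq 0 (N + N)) by (f_equal; lia). rewrite Cprod_seq_add.
  rewrite (Cprod_map_ext _ (fun k => Cmul (Cpow x (2 * k)) (Cadd C1 (Cpow x (2 * (N - 1 - k) + 1))))).
  2:{ intros k Hk. apply in_seq in Hk. rewrite <- Cpow_mul.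
      replace (Cpow x (2 * N - 1)) with (Cmul (Cpow x (2 * k)) (Cpow x (2 * (N - 1 - k) + 1)))
        by (rewrite <- Cpow_add; f_equal; lia).
      field. }
  rewrite Cprod_map_mul, Cprod_pow_even, (Cprod_seq_rev (fun i => Cadd C1 (Cpow x (2 * i + 1)))),
    (Cprod_seq_shift _ N N),
    (Cprod_map_ext (fun i => Cadd (Cpow x (2 * N - 1)) (Cmul (Cpow (Cpow x 2) (N + i)) C1))
       (fun i => Cmul (Cpow x (2 * N - 1)) (Cadd C1 (Cpow x (2 * i + 1))))).
  2:{ intros i Hi. rewrite <- Cpow_mul.
      replace (Cpow x (2 * (N + i))) with (Cmul (Cpow x (2 * N - 1)) (Cpow x (2 * i + 1)))
        by (rewrite <- Cpow_add; f_equal; lia).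
      field. }
  rewrite Cprod_map_mul, Cprod_const, length_seq. unfold odd_qpoch.
  rewrite Cpow_add, <- Cpow_mul. field.
Qed.

(* The exponent [2 tri m + (2N-1)(2N-m)] produced by the q-binomial theorem, centred at [m = N]. *)
Lemma exponent_centred N m : (1 <= N)%nat -> (m <= 2 * N)%nat ->
  (2 * tri m + (2 * N - 1) * (2 * N - m) =
   2 * tri N + (2 * N - 1) * N + absdiff m N * absdiff m N)%nat.
Proof.
  intros H1 H2. pose proof (tri_double m). pose proof (tri_double N). unfold absdiff.
  destruct (Nat.leb_spec m N).
  - remember (N - m)%nat as d. assert (N = m + d)%nat by lia. subst N.
    replace (2 * (m + d) - 1)%nat with (2 * m + 2 * d - 1)%nat by lia.
    replace (2 * (m + d) - m)%nat with (m + 2 * d)%nat by lia.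
    replace (m - (m + d) + d)%nat with d by lia.
    destruct m; destruct d; simpl in *; nia.
  - remember (m - N)%nat as d. assert (m = N + d)%nat by lia. subst m.
    replace (2 * N - (N + d))%nat with (N - d)%nat by lia.
    replace (N + d - N + (N - (N + d)))%nat with d by lia.
    nia.
Qed.

Lemma odd_qpoch_sq x N : x <> C0 -> (1 <= N)%nat ->
  Cmul (odd_qpoch x N) (odd_qpoch x N) =
  Csum_list (map (fun m => Cmul (qbinom (Cpow x 2) (2 * N) m) (Cpow x (absdiff m N * absdiff m N)))
    (seq 0 (S (2 * N)))).
Proof.
  intros Hx HN.
  pose proof (q_binomial (Cpow x 2) (Cpow x (2 * N - 1)) (2 * N) C1) as Q.
  rewrite Cprod_pair_odd in Q by auto.
  set (a := Cpow x (2 * tri N + (2 * N - 1) * N)) in Q.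
  rewrite (Csum_map_ext _ (fun m => Cmul a
       (Cmul (qbinom (Cpow x 2) (2 * N) m) (Cpow x (absdiff m N * absdiff m N))))) in Q.
  2:{ intros m Hm. apply in_seq in Hm. unfold a. rewrite Cpow_C1, <- !Cpow_mul.
      transitivity (Cmul (qbinom (Cpow x 2) (2 * N) m)
                         (Cpow x (2 * tri m + (2 * N - 1) * (2 * N - m)))); [rewrite Cpow_add; field|].
      rewrite exponent_centred, !Cpow_add by lia. field. }
  rewrite Csum_map_scal in Q. apply (Cmul_cancel_l a); [apply Cpow_neq0; auto | exact Q].
Qed.

(* The factors [(1 - x^(2n)) (1 + x^(2n-1))^2] of the triple product, indexed by [k = 2n] and [k = 2n-1]. *)
Definition jtp_factor (k : nat) (y : Cplx) : Cplx :=
  if Nat.even k then Csub C1 y else Cmul (Cadd C1 y) (Cadd C1 y).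

Definition jtp_partial (N : nat) (x : Cplx) : Cplx :=
  Cprod_list (map (fun k => jtp_factor k (Cpow x k)) (seq 1 (2 * N))).

Lemma jtp_partial_qpoch N x :
  jtp_partial N x = Cmul (qpoch (Cpow x 2) N) (Cmul (odd_qpoch x N) (odd_qpoch x N)).
Proof.
  induction N; [unfold jtp_partial, qpoch, odd_qpoch; simpl; field|].
  unfold jtp_partial. replace (2 * S N)%nat with (S (S (2 * N))) by lia.
  rewrite !Cprod_seq_S. fold (jtp_partial N x). rewrite IHN, qpoch_S.
  unfold odd_qpoch at 3 4. rewrite (Cprod_seq_S _ 0 N). fold (odd_qpoch x N).
  replace (1 + 2 * N)%nat with (2 * N + 1)%nat by lia.
  replace (1 + S (2 * N))%nat with (2 * S N)%nat by lia.
  unfold jtp_factor. rewrite Nat.even_odd, Nat.even_even, <- Cpow_mul. simpl (0 + N)%nat. field.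
Qed.

Lemma jtp_partial_sum N x : x <> C0 -> (1 <= N)%nat ->
  jtp_partial N x =
  Csum_list (map (fun m => Cmul (Cmul (qpoch (Cpow x 2) N) (qbinom (Cpow x 2) (2 * N) m))
                                (Cpow x (absdiff m N * absdiff m N))) (seq 0 (S (2 * N)))).
Proof.
  intros Hx HN. rewrite jtp_partial_qpoch, odd_qpoch_sq, <- Csum_map_scal by auto.
  apply Csum_map_ext. intros; field.
Qed.

Definition gauss_sum (N : nat) (x : Cplx) : Cplx :=
  Csum_list (map (fun m => Cpow x (absdiff m N * absdiff m N)) (seq 0 (S (2 * N)))).

Lemma gauss_sum_S N x : gauss_sum (S N) x = Cadd (gauss_sum N x) (Cscal 2 (Cpow x (S N * S N))).
Proof.
  unfold gauss_sum. replace (S (2 * S N)) with (S (S (S (2 * N)))) by lia.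
  rewrite Csum_seq_succ, (Csum_map_ext _ (fun m => Cpow x (absdiff m N * absdiff m N))).
  2:{ intros; reflexivity. }
  rewrite Csum_seq_S. unfold absdiff.
  replace (0 - S N + (S N - 0))%nat with (S N) by lia.
  replace (S (2 * N) - N + (N - S (2 * N)))%nat with (S N) by lia.
  unfold Cscal, Cadd; simpl. f_equal; ring.
Qed.

Lemma gauss_sum_theta_partial N x : gauss_sum (S N) x = theta_partial x N.
Proof.
  induction N.
  - rewrite gauss_sum_S. unfold gauss_sum, theta_partial, absdiff. simpl.
    unfold Cadd, Cscal, C1, C0; simpl. f_equal; ring.
  - rewrite gauss_sum_S, IHN. unfold theta_partial. rewrite (Csum_seq_S _ (S N)).
    unfold Cadd, Cscal; simpl. f_equal; ring.
Qed.

Lemma binomial_second_order h n : 0 <= h ->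
  1 + INR n * h + INR n * (INR n - 1) / 2 * (h * h) <= (1 + h) ^ n.
Proof.
  intros Hh. induction n; [simpl; lra|].
  rewrite S_INR. simpl pow. assert (0 <= INR n) by apply pos_INR.
  destruct n; [simpl; lra|].
  assert (0 <= INR (S n) * (INR (S n) - 1) / 2 * (h * h * h)).
  { rewrite S_INR. assert (0 <= INR n) by apply pos_INR.
    apply Rmult_le_pos; [apply Rmult_le_pos; [apply Rmult_le_pos|]|]; try lra.
    apply Rmult_le_pos; [apply Rmult_le_pos|]; lra. }
  nra.
Qed.

Lemma mul_pow_le rho n : 0 < rho < 1 -> (2 <= n)%nat ->
  INR n * rho ^ n <= 2 / ((INR n - 1) * ((/ rho - 1) * (/ rho - 1))).
Proof.
  intros Hr Hn. set (h := / rho - 1).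
  assert (Hh : 0 < h) by (unfold h; assert (1 < / rho) by (rewrite <- Rinv_1; apply Rinv_lt_contravar; lra); lra).
  assert (Hn1 : 1 <= INR n - 1) by (apply (le_INR 2) in Hn; simpl in Hn; lra).
  assert (Hpn : rho ^ n * (1 + h) ^ n = 1)
    by (rewrite <- Rpow_mult_distr; replace (rho * (1 + h)) with 1 by (unfold h; field; lra); apply pow1).
  pose proof (binomial_second_order h n (Rlt_le _ _ Hh)).
  assert (0 <= INR n * h) by (apply Rmult_le_pos; [apply pos_INR | lra]).
  assert (0 < rho ^ n) by (apply pow_lt; lra).
  assert (0 < (INR n - 1) * (h * h)) by (apply Rmult_lt_0_compat; [lra | nra]).
  apply Rmult_le_reg_r with ((INR n - 1) * (h * h)); [lra|].
  replace (2 / ((INR n - 1) * (h * h)) * ((INR n - 1) * (h * h))) with 2 by (field; lra).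
  assert (INR n * (INR n - 1) / 2 * (h * h) * rho ^ n <= (1 + h) ^ n * rho ^ n)
    by (apply Rmult_le_compat_r; lra).
  nra.
Qed.

Lemma mul_pow_cv0 rho : 0 <= rho < 1 ->
  forall e, 0 < e -> exists N0, forall n, (N0 <= n)%nat -> INR n * rho ^ n < e.
Proof.
  intros Hr e He. destruct (Req_dec rho 0) as [->|H0].
  - exists 1%nat. intros n Hn. rewrite pow_i by lia. lra.
  - assert (Hh : 0 < / rho - 1)
      by (assert (1 < / rho) by (rewrite <- Rinv_1; apply Rinv_lt_contravar; lra); lra).
    set (c := 2 / ((/ rho - 1) * (/ rho - 1))).
    assert (Hc : 0 < c) by (apply Rdiv_lt_0_compat; nra).
    assert (Hce : 0 < c / e) by (apply Rdiv_lt_0_compat; lra).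
    destruct (archimed (c / e)) as [Ha _].
    destruct (IZN (up (c / e))) as [M HM]; [apply le_IZR; simpl; lra|].
    exists (M + 2)%nat. intros n Hn.
    assert (HnM : c / e + 1 < INR n).
    { assert (IZR (up (c / e)) + 1 <= INR n); [|lra].
      rewrite HM, <- INR_IZR_INZ, <- S_INR. apply le_INR. lia. }
    eapply Rle_lt_trans; [apply mul_pow_le; [lra | lia]|].
    replace (2 / ((INR n - 1) * ((/ rho - 1) * (/ rho - 1)))) with (c / (INR n - 1))
      by (unfold c; field; repeat split; lra).
    assert (c < e * (INR n - 1)) by (assert (c / e * e = c) by (field; lra); nra).
    apply Rmult_lt_reg_r with (INR n - 1); [lra|].
    replace (c / (INR n - 1) * (INR n - 1)) with c by (field; lra). lra.
Qed.

Definition Rprod (l : list R) : R := fold_right Rmult 1 l.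
Definition Rsum (l : list R) : R := fold_right Rplus 0 l.

Lemma Rsum_ge0 l : (forall a, In a l -> 0 <= a) -> 0 <= Rsum l.
Proof. induction l; simpl; intros H; [lra|]. assert (0 <= a) by auto. assert (0 <= Rsum l) by auto. lra. Qed.

Lemma Rprod_one_plus_le_exp l : (forall a, In a l -> 0 <= a) ->
  1 <= Rprod (map (fun a => 1 + a) l) <= exp (Rsum l).
Proof.
  induction l; simpl; intros H; [rewrite exp_0; lra|].
  rewrite exp_plus. assert (0 <= a) by auto. destruct IHl as [IH1 IH2]; auto.
  split; [nra|]. apply Rmult_le_compat; [lra | lra | apply exp_ineq1_le | auto].
Qed.

Lemma Cprod_one_sub_bound (bs : list Cplx) :
  Cnorm (Cprod_list (map (fun b => Csub C1 b) bs)) <= Rprod (map (fun b => 1 + Cnorm b) bs) /\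
  Cnorm (Csub (Cprod_list (map (fun b => Csub C1 b) bs)) C1) <= Rprod (map (fun b => 1 + Cnorm b) bs) - 1.
Proof.
  induction bs as [|b bs IH]; simpl.
  - rewrite Cnorm_C1. replace (Csub C1 C1) with C0 by field. rewrite Cnorm_C0. lra.
  - destruct IH as [H1 H2]. set (P := Cprod_list (map (fun b => Csub C1 b) bs)) in *.
    set (Q := Rprod (map (fun b => 1 + Cnorm b) bs)) in *.
    pose proof (Cnorm_ge0 b). pose proof (Cnorm_ge0 P).
    split.
    + rewrite Cnorm_mul. apply Rmult_le_compat; auto; [apply Cnorm_ge0|].
      eapply Rle_trans; [apply Cnorm_triang_sub|]. rewrite Cnorm_C1. lra.
    + replace (Csub (Cmul (Csub C1 b) P) C1) with (Csub (Csub P C1) (Cmul b P)) by field.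
      eapply Rle_trans; [apply Cnorm_triang_sub|]. rewrite Cnorm_mul.
      assert (Cnorm b * Cnorm P <= Cnorm b * Q) by (apply Rmult_le_compat_l; auto). nra.
Qed.

Lemma geometric_tail_le r a l : 0 <= r < 1 ->
  Rsum (map (fun k => r ^ S k) (seq a l)) <= r ^ a / (1 - r).
Proof.
  intros Hr. revert a; induction l; intros a; simpl.
  - apply Rmult_le_pos; [apply pow_le; lra | apply Rlt_le, Rinv_0_lt_compat; lra].
  - specialize (IHl (S a)). simpl in IHl.
    assert (0 <= r ^ a) by (apply pow_le; lra).
    assert (r * r ^ a / (1 - r) = r * (r ^ a / (1 - r))) by (field; lra).
    assert (r ^ a / (1 - r) * (1 - r) = r ^ a) by (field; lra).
    assert (0 <= r ^ a / (1 - r)) by (apply Rmult_le_pos; auto; apply Rlt_le, Rinv_0_lt_compat; lra).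
    nra.
Qed.

Lemma exp_sub1_le s : 0 <= s -> exp s - 1 <= s * exp s.
Proof.
  intros Hs. pose proof (exp_ineq1_le (- s)). pose proof (exp_pos s).
  assert (exp (- s) * exp s = 1) by (rewrite <- exp_plus; replace (- s + s) with 0 by ring; apply exp_0).
  nra.
Qed.

Definition qpoch_seg (q : Cplx) (a l : nat) : Cplx :=
  Cprod_list (map (fun k => Csub C1 (Cpow q (S k))) (seq a l)).

Lemma qpoch_add q a l : qpoch q (a + l) = Cmul (qpoch q a) (qpoch_seg q a l).
Proof. apply Cprod_seq_add. Qed.

Definition qpoch_bound (r : R) : R := exp (1 / (1 - r)).

Lemma qpoch_seg_bounds q a l : Cnorm q < 1 ->
  Cnorm (qpoch_seg q a l) <= qpoch_bound (Cnorm q) /\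
  Cnorm (Csub (qpoch_seg q a l) C1) <= qpoch_bound (Cnorm q) * (Cnorm q ^ a / (1 - Cnorm q)).
Proof.
  intros Hq. set (r := Cnorm q). assert (Hr : 0 <= r < 1) by (split; [apply Cnorm_ge0 | auto]).
  pose proof (Cprod_one_sub_bound (map (fun k => Cpow q (S k)) (seq a l))) as [H1 H2].
  rewrite !map_map in H1, H2. fold (qpoch_seg q a l) in H1, H2.
  set (ls := map (fun k => r ^ S k) (seq a l)).
  replace (map (fun x => 1 + Cnorm (Cpow q (S x))) (seq a l)) with (map (fun a => 1 + a) ls) in H1, H2
    by (unfold ls; rewrite map_map; apply map_ext; intros; rewrite Cnorm_pow; reflexivity).
  assert (Hpos : forall b, In b ls -> 0 <= b).
  { intros b Hb. apply in_map_iff in Hb. destruct Hb as [k [<- _]]. apply pow_le; lra. }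
  pose proof (Rprod_one_plus_le_exp ls Hpos) as [_ HE].
  assert (Hs : Rsum ls <= r ^ a / (1 - r)) by apply geometric_tail_le, Hr.
  assert (Hra : r ^ a <= 1) by (rewrite <- (pow1 a); apply pow_incr; lra).
  assert (r ^ a / (1 - r) <= 1 / (1 - r))
    by (apply Rmult_le_compat_r; [apply Rlt_le, Rinv_0_lt_compat; lra | lra]).
  pose proof (Rsum_ge0 ls Hpos) as Hs0.
  assert (exp (Rsum ls) <= qpoch_bound r)
    by (unfold qpoch_bound; destruct (Req_dec (Rsum ls) (1 / (1 - r))) as [e|e];
        [rewrite e; lra | left; apply exp_increasing; lra]).
  pose proof (exp_sub1_le _ Hs0).
  assert (Rsum ls * exp (Rsum ls) <= (r ^ a / (1 - r)) * qpoch_bound r)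
    by (apply Rmult_le_compat; auto; left; apply exp_pos).
  split; lra.
Qed.

Lemma Cnorm_pow_lt1 q k : Cnorm q < 1 -> Cnorm (Cpow q (S k)) < 1.
Proof.
  intros H. rewrite Cnorm_pow. pose proof (Cnorm_ge0 q).
  apply pow_lt_1_compat; [lra | lia].
Qed.

Lemma one_sub_neq0 b : Cnorm b < 1 -> Csub C1 b <> C0.
Proof.
  intros H E. assert (b = C1) by (transitivity (Csub C1 (Csub C1 b)); [field | rewrite E; field]).
  subst b. rewrite Cnorm_C1 in H. lra.
Qed.

Lemma qpoch_neq0 q n : Cnorm q < 1 -> qpoch q n <> C0.
Proof.
  intros H. apply Cprod_neq0. intros z Hz. apply in_map_iff in Hz. destruct Hz as [k [<- _]].
  apply one_sub_neq0, Cnorm_pow_lt1; auto.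
Qed.

Lemma qpoch_qbinom_segments q N m : Cnorm q < 1 -> (m <= 2 * N)%nat ->
  exists a1 l1 a2 l2, (N - absdiff m N <= a1)%nat /\ (N - absdiff m N <= a2)%nat /\
    Cmul (qpoch q N) (qbinom q (2 * N) m) = Cmul (qpoch_seg q a1 l1) (qpoch_seg q a2 l2).
Proof.
  intros Hq Hm. pose proof (qbinom_qpoch q (2 * N) m Hm) as HG.
  assert (Hne : Cmul (qpoch q m) (qpoch q (2 * N - m)) <> C0)
    by (apply Cmul_neq0; apply qpoch_neq0; auto).
  unfold absdiff. destruct (Nat.leb_spec m N).
  - exists m, (N - m)%nat, (2 * N - m)%nat, m. split; [lia | split; [lia|]].
    apply (Cmul_cancel_l _ _ _ Hne).
    transitivity (Cmul (qpoch q N) (Cmul (Cmul (qbinom q (2 * N) m) (qpoch q m)) (qpoch q (2 * N - m))));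
      [field|].
    rewrite HG.
    replace (qpoch q N) with (Cmul (qpoch q m) (qpoch_seg q m (N - m)))
      by (rewrite <- qpoch_add; f_equal; lia).
    replace (qpoch q (2 * N)) with (Cmul (qpoch q (2 * N - m)) (qpoch_seg q (2 * N - m) m))
      by (rewrite <- qpoch_add; f_equal; lia).
    field.
  - exists (2 * N - m)%nat, (m - N)%nat, m, (2 * N - m)%nat. split; [lia | split; [lia|]].
    apply (Cmul_cancel_l _ _ _ Hne).
    transitivity (Cmul (qpoch q N) (Cmul (Cmul (qbinom q (2 * N) m) (qpoch q m)) (qpoch q (2 * N - m))));
      [field|].
    rewrite HG.
    replace (qpoch q N) with (Cmul (qpoch q (2 * N - m)) (qpoch_seg q (2 * N - m) (m - N)))
      by (rewrite <- qpoch_add; f_equal; lia).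
    replace (qpoch q (2 * N)) with (Cmul (qpoch q m) (qpoch_seg q m (2 * N - m)))
      by (rewrite <- qpoch_add; f_equal; lia).
    field.
Qed.

Definition coef_bound (r : R) : R := (qpoch_bound r * qpoch_bound r + qpoch_bound r) / (1 - r).

Lemma coef_bound_ge0 r : 0 <= r < 1 -> 0 <= coef_bound r.
Proof.
  intros H. unfold coef_bound, qpoch_bound. pose proof (exp_pos (1 / (1 - r))).
  apply Rmult_le_pos; [nra | apply Rlt_le, Rinv_0_lt_compat; lra].
Qed.

Lemma qpoch_qbinom_sub1_le q N m : Cnorm q < 1 -> (m <= 2 * N)%nat ->
  Cnorm (Csub (Cmul (qpoch q N) (qbinom q (2 * N) m)) C1) <=
  coef_bound (Cnorm q) * Cnorm q ^ (N - absdiff m N).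
Proof.
  intros Hq Hm. destruct (qpoch_qbinom_segments q N m Hq Hm) as (a1 & l1 & a2 & l2 & H1 & H2 & ->).
  set (r := Cnorm q). assert (Hr : 0 <= r < 1) by (split; [apply Cnorm_ge0 | auto]).
  destruct (qpoch_seg_bounds q a1 l1 Hq) as [B1 B1']. destruct (qpoch_seg_bounds q a2 l2 Hq) as [B2 B2'].
  fold r in B1, B1', B2, B2'.
  set (T1 := qpoch_seg q a1 l1) in *. set (T2 := qpoch_seg q a2 l2) in *.
  replace (Csub (Cmul T1 T2) C1) with (Cadd (Cmul T1 (Csub T2 C1)) (Csub T1 C1)) by field.
  eapply Rle_trans; [apply Cnorm_triang|]. rewrite Cnorm_mul.
  set (d := (N - absdiff m N)%nat) in *. set (E := qpoch_bound r) in *.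
  assert (HE : 0 < E) by apply exp_pos.
  assert (Hg : forall a, (d <= a)%nat -> r ^ a / (1 - r) <= r ^ d / (1 - r)).
  { intros a Ha. apply Rmult_le_compat_r; [apply Rlt_le, Rinv_0_lt_compat; lra|].
    apply pow_le_pow_le1; [lra | auto]. }
  specialize (Hg a1 H1) as G1. specialize (Hg a2 H2) as G2.
  pose proof (Cnorm_ge0 T1). pose proof (Cnorm_ge0 (Csub T2 C1)).
  assert (Cnorm T1 * Cnorm (Csub T2 C1) <= E * (E * (r ^ d / (1 - r)))).
  { apply Rmult_le_compat; auto. eapply Rle_trans; [exact B2'|]. apply Rmult_le_compat_l; lra. }
  assert (Cnorm (Csub T1 C1) <= E * (r ^ d / (1 - r))).
  { eapply Rle_trans; [exact B1'|]. apply Rmult_le_compat_l; lra. }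
  unfold coef_bound. fold E.
  replace ((E * E + E) / (1 - r) * r ^ d) with (E * (E * (r ^ d / (1 - r))) + E * (r ^ d / (1 - r)))
    by (field; lra).
  lra.
Qed.

Lemma jtp_partial_gauss_sum_le N x : x <> C0 -> Cnorm x < 1 -> (1 <= N)%nat ->
  Cnorm (Csub (jtp_partial N x) (gauss_sum N x)) <=
  INR (S (2 * N)) * (coef_bound (Cnorm x ^ 2) * Cnorm x ^ (2 * N - 1)).
Proof.
  intros Hx H1 HN. rewrite jtp_partial_sum by auto. unfold gauss_sum. rewrite <- Csum_map_sub.
  set (rho := Cnorm x). assert (Hr : 0 <= rho < 1) by (split; [apply Cnorm_ge0 | auto]).
  assert (Hq : Cnorm (Cpow x 2) < 1) by (rewrite Cnorm_pow; fold rho; nra).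
  match goal with |- Cnorm (Csum_list ?l) <= _ =>
    replace (INR (S (2 * N))) with (INR (length l)) by now rewrite length_map, length_seq end.
  apply Cnorm_Csum_le. intros z Hz. apply in_map_iff in Hz. destruct Hz as [m [<- Hm]]. apply in_seq in Hm.
  set (c := Cmul (qpoch (Cpow x 2) N) (qbinom (Cpow x 2) (2 * N) m)).
  set (d := absdiff m N).
  replace (Csub (Cmul c (Cpow x (d * d))) (Cpow x (d * d))) with (Cmul (Csub c C1) (Cpow x (d * d))) by field.
  rewrite Cnorm_mul, Cnorm_pow. fold rho.
  pose proof (qpoch_qbinom_sub1_le (Cpow x 2) N m Hq ltac:(lia)) as Hc. rewrite Cnorm_pow in Hc. fold rho c d in Hc.
  assert (Hd : (d <= N)%nat) by (unfold d, absdiff; lia).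
  assert (HK : 0 <= coef_bound (rho ^ 2)) by (apply coef_bound_ge0; nra).
  assert (Hpow : (rho ^ 2) ^ (N - d) * rho ^ (d * d) <= rho ^ (2 * N - 1))
    by (rewrite <- pow_mult, <- pow_add; apply pow_le_pow_le1; [lra | nia]).
  assert (0 <= rho ^ (d * d)) by (apply pow_le; lra).
  eapply Rle_trans; [apply Rmult_le_compat_r; [auto | exact Hc]|].
  rewrite Rmult_assoc. apply Rmult_le_compat_l; auto.
Qed.

Theorem jtp_partial_cv x L : x <> C0 -> Cnorm x < 1 -> Ccv (theta_partial x) L ->
  Ccv (fun N => jtp_partial (S N) x) L.
Proof.
  intros Hx H1 HL. apply (Ccv_close (theta_partial x)); auto.
  intros e He. set (rho := Cnorm x). assert (Hr : 0 <= rho < 1) by (split; [apply Cnorm_ge0 | auto]).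
  set (K := coef_bound (rho ^ 2)). assert (HK : 0 <= K) by (apply coef_bound_ge0; nra).
  destruct (mul_pow_cv0 rho Hr (e / (3 * K + 1))) as [N0 HN0]; [apply Rdiv_lt_0_compat; lra|].
  exists N0. intros N HN. rewrite <- gauss_sum_theta_partial.
  eapply Rle_lt_trans; [apply jtp_partial_gauss_sum_le; auto; lia|]. fold rho K.
  replace (2 * S N - 1)%nat with (2 * N + 1)%nat by lia.
  specialize (HN0 (2 * N + 1)%nat ltac:(lia)).
  assert (HI : INR (S (2 * S N)) <= 3 * INR (2 * N + 1))
    by (replace 3 with (INR 3) by (simpl; ring); rewrite <- mult_INR; apply le_INR; lia).
  assert (0 <= INR (2 * N + 1) * rho ^ (2 * N + 1)) by (apply Rmult_le_pos; [apply pos_INR | apply pow_le; lra]).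
  assert (0 <= rho ^ (2 * N + 1)) by (apply pow_le; lra).
  assert (e / (3 * K + 1) * (3 * K + 1) = e) by (field; lra).
  assert (INR (S (2 * S N)) * (K * rho ^ (2 * N + 1)) <= 3 * K * (INR (2 * N + 1) * rho ^ (2 * N + 1))).
  { replace (3 * K * (INR (2 * N + 1) * rho ^ (2 * N + 1)))
      with (K * ((3 * INR (2 * N + 1)) * rho ^ (2 * N + 1))) by ring.
    rewrite <- Rmult_assoc, (Rmult_comm _ K), Rmult_assoc.
    apply Rmult_le_compat_l; auto. apply Rmult_le_compat_r; auto. }
  nra.
Qed.

(** * Non-vanishing of [theta3] *)

Lemma Rprod_app l1 l2 : Rprod (l1 ++ l2) = Rprod l1 * Rprod l2.
Proof. induction l1; simpl; [ring|]. rewrite IHl1. ring. Qed.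

Lemma Rprod_map_sq {A} (f : A -> R) l :
  Rprod (map (fun k => f k * f k) l) = Rprod (map f l) * Rprod (map f l).
Proof. induction l; simpl; [ring|]. rewrite IHl. ring. Qed.

Lemma Rprod_le (f g : nat -> R) l :
  (forall k, 0 <= f k <= g k) -> 0 <= Rprod (map f l) <= Rprod (map g l).
Proof.
  intros H. induction l; simpl; [lra|]. specialize (H a).
  split; [apply Rmult_le_pos | apply Rmult_le_compat]; lra.
Qed.

Lemma Rprod_one_sub_bounds (c : nat -> R) l : (forall k, 0 <= c k <= 1) ->
  1 - Rsum (map c l) <= Rprod (map (fun k => 1 - c k) l) <= 1.
Proof.
  intros H. induction l; simpl; [lra|].
  destruct IHl as [IH1 IH2].
  pose proof (proj1 (Rprod_le (fun k => 1 - c k) (fun k => 1 - c k) l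
                       ltac:(intros k; specialize (H k); lra))).
  assert (0 <= Rsum (map c l)) by (apply Rsum_ge0; intros b Hb;
    apply in_map_iff in Hb; destruct Hb as [k [<- _]]; apply H).
  specialize (H a). split; nra.
Qed.

Definition euler_partial (rho : R) (n : nat) : R := Rprod (map (fun k => 1 - rho ^ S k) (seq 0 n)).

Lemma euler_partial_add rho a b :
  euler_partial rho (a + b) = euler_partial rho a * Rprod (map (fun k => 1 - rho ^ S k) (seq a b)).
Proof.
  unfold euler_partial. rewrite seq_app, map_app, Rprod_app. reflexivity.
Qed.

Lemma euler_partial_pos rho n : 0 <= rho < 1 -> 0 < euler_partial rho n.
Proof.
  intros Hr. unfold euler_partial. induction (seq 0 n); cbn [map Rprod fold_right]; [lra|].
  apply Rmult_lt_0_compat; auto.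
  pose proof (pow_lt_1_compat rho (S a) Hr ltac:(lia)). lra.
Qed.

Lemma euler_partial_lower_bound rho : 0 <= rho < 1 ->
  exists L, 0 < L /\ forall n, L <= euler_partial rho n.
Proof.
  intros Hr.
  assert (Hc : forall k, 0 <= rho ^ S k <= 1)
    by (intros; split; [apply pow_le; lra | rewrite <- (pow1 (S k)); apply pow_incr; lra]).
  destruct (pow_lt_1_zero rho ltac:(rewrite Rabs_pos_eq; lra) ((1 - rho) / 2) ltac:(lra)) as [K HK].
  specialize (HK K (le_n _)). rewrite Rabs_pos_eq in HK by (apply pow_le; lra).
  pose proof (euler_partial_pos rho K Hr) as HW.
  exists (euler_partial rho K / 2). split; [lra|]. intros n.
  destruct (le_lt_dec n K) as [h|h].
  - (* the factors beyond [n] are at most [1] *)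
    replace K with (n + (K - n))%nat in HW |- * by lia. rewrite euler_partial_add in HW |- *.
    pose proof (Rprod_one_sub_bounds (fun k => rho ^ S k) (seq n (K - n)) Hc).
    pose proof (euler_partial_pos rho n Hr). nra.
  - (* the factors beyond [K] have product at least [1 - rho^K / (1 - rho) >= 1/2] *)
    replace n with (K + (n - K))%nat by lia. rewrite euler_partial_add.
    pose proof (Rprod_one_sub_bounds (fun k => rho ^ S k) (seq K (n - K)) Hc).
    pose proof (geometric_tail_le rho K (n - K) Hr).
    assert (rho ^ K / (1 - rho) <= 1 / 2).
    { apply Rmult_le_reg_r with (1 - rho); [lra|].
      replace (rho ^ K / (1 - rho) * (1 - rho)) with (rho ^ K) by (field; lra). lra. }
    nra.
Qed.

Lemma Cnorm_jtp_factor_ge k y : Cnorm y <= 1 -> (1 - Cnorm y) * (1 - Cnorm y) <= Cnorm (jtp_factor k y).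
Proof.
  intros H. pose proof (Cnorm_ge0 y). unfold jtp_factor. destruct (Nat.even k).
  - pose proof (Cnorm_triang_rev C1 y). rewrite Cnorm_C1 in *. nra.
  - rewrite Cnorm_mul. pose proof (Cnorm_triang_rev C1 (Copp y)) as Hy.
    rewrite Cnorm_C1, Cnorm_opp in Hy. replace (Csub C1 (Copp y)) with (Cadd C1 y) in Hy by field.
    apply Rmult_le_compat; lra.
Qed.

Lemma jtp_partial_lower_bound x : Cnorm x < 1 ->
  exists L, 0 < L /\ forall N, L <= Cnorm (jtp_partial N x).
Proof.
  intros H. set (rho := Cnorm x). assert (Hr : 0 <= rho < 1) by (split; [apply Cnorm_ge0 | auto]).
  destruct (euler_partial_lower_bound rho Hr) as [L [HL HW]]. exists (L * L). split; [nra|]. intros N.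
  unfold jtp_partial. rewrite Cnorm_Cprod.
  assert (Hk : forall k, 0 <= (1 - rho ^ k) * (1 - rho ^ k) <= Cnorm (jtp_factor k (Cpow x k))).
  { intros k. assert (rho ^ k <= 1) by (rewrite <- (pow1 k); apply pow_incr; lra).
    split; [nra|]. replace (rho ^ k) with (Cnorm (Cpow x k)) by apply Cnorm_pow.
    apply Cnorm_jtp_factor_ge. rewrite Cnorm_pow. fold rho. lra. }
  eapply Rle_trans; [|apply (Rprod_le _ _ _ Hk)].
  replace (Rprod (map (fun k => (1 - rho ^ k) * (1 - rho ^ k)) (seq 1 (2 * N))))
    with (euler_partial rho (2 * N) * euler_partial rho (2 * N)).
  - specialize (HW (2 * N)%nat). nra.
  - unfold euler_partial. rewrite <- Rprod_map_sq, <- seq_shift, map_map. reflexivity.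
Qed.

Theorem theta3_neq0 tau : 0 < Cim tau -> theta3 tau <> C0.
Proof.
  intros H E. pose proof (Cnorm_nome_lt1 tau H) as Hq.
  pose proof (jtp_partial_cv (nome tau) (theta3 tau) (Cexp_neq0 _) Hq (theta_partial_cv tau H)) as T.
  destruct (jtp_partial_lower_bound (nome tau) Hq) as [L [HL0 HLb]].
  pose proof (Cnorm_lim_ge _ _ L T (fun N => HLb (S N))) as Hn.
  rewrite E, Cnorm_C0 in Hn. lra.
Qed.

(** * Products over roots of unity *)

Module RootsOfUnity.
Import all_boot all_order all_algebra Rstruct complex GRing.Theory.
Local Open Scope ring_scope.

Definition to_complex (z : Cplx) : R[i] := Complex (fst z) (snd z).

Lemma to_complex_inj a b : to_complex a = to_complex b -> a = b.
Proof. by case: a => a1 a2; case: b => b1 b2 [-> ->]. Qed.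

Lemma to_complex_mul a b : to_complex (Cmul a b) = to_complex a * to_complex b.
Proof. by case: a => a1 a2; case: b => b1 b2. Qed.

Lemma to_complex_sub a b : to_complex (Csub a b) = to_complex a - to_complex b.
Proof. by case: a => a1 a2; case: b => b1 b2. Qed.

Lemma to_complex_pow a k : to_complex (Cpow a k) = to_complex a ^+ k.
Proof. elim: k => [|k IH] //=. by rewrite to_complex_mul IH exprS. Qed.

Lemma to_complex_prod (f : nat -> Cplx) (l : seq nat) :
  to_complex (Cprod_list (List.map f l)) = \prod_(i <- l) to_complex (f i).
Proof. elim: l => [|a l IH]; [by rewrite big_nil | by rewrite big_cons /= to_complex_mul IH]. Qed.

Lemma prod_one_sub_root (z y : R[i]) (n : nat) : n.-primitive_root z ->
  \prod_(i <- iota 0 n) (1 - z ^+ i * y) = 1 - y ^+ n.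
Proof.
  move=> prim. have n_gt0 := prim_order_gt0 prim.
  have [->|y_neq0] := eqVneq y 0.
    by rewrite expr0n gtn_eqF // subr0 big1 // => i _; rewrite mulr0 subr0.
  (* evaluate [X^n - 1 = prod_i (X - z^i)] at [1/y] *)
  have := congr1 (fun p => p.[y^-1]) (factor_Xn_sub_1 prim).
  rewrite horner_prod !hornerE /=. under eq_bigr do rewrite !hornerE. move=> H.
  transitivity (\prod_(i <- iota 0 n) (y * (y^-1 - z ^+ i))).
    by apply: eq_bigr => i _; rewrite mulrBr mulfV // mulrC.
  have -> : iota 0 n = index_iota 0 n by rewrite /index_iota subn0.
  rewrite big_split /= prodr_const_nat subn0.
  by rewrite H mulrBr exprVn mulfV ?expf_neq0 // mulr1.
Qed.

Lemma Cprod_one_sub_root (z y : Cplx) (n : nat) : (0 < n)%coq_nat -> Cpow z n = Defs.C1 ->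
  (forall k, (0 < k)%coq_nat -> (k < n)%coq_nat -> Cpow z k <> Defs.C1) ->
  Cprod_list (List.map (fun w => Csub Defs.C1 (Cmul (Cpow z w) y)) (List.seq 0 n)) =
  Csub Defs.C1 (Cpow y n).
Proof.
  move=> n_gt0 zn zk. apply: to_complex_inj.
  have -> : List.seq 0 n = iota 0 n by elim: n {n_gt0 zn zk} 0%N => [|n IH] m //=; rewrite IH.
  rewrite to_complex_prod to_complex_sub to_complex_pow.
  under eq_bigr do rewrite to_complex_sub to_complex_mul to_complex_pow.
  apply: prod_one_sub_root. apply/andP; split; first by apply/ltP.
  apply/forallP => i. rewrite unity_rootE.
  case: (ltngtP i.+1 n) => h.
  - apply/eqP/negP => /eqP E. apply: (zk i.+1); [by apply/ltP | by apply/ltP |].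
    by apply: to_complex_inj; rewrite to_complex_pow E.
  - by move: (ltn_ord i); rewrite ltnNge -ltnS h.
  - by rewrite h -to_complex_pow zn eqxx.
Qed.

End RootsOfUnity.

Definition zeta (p : nat) : Cplx := Cexp (0, 2 * PI / INR p).

Lemma zeta_pow p m : Cpow (zeta p) m = (cos (2 * PI * INR m / INR p), sin (2 * PI * INR m / INR p)).
Proof.
  unfold zeta. rewrite <- Cexp_scal_nat. unfold Cexp, Cscal; simpl.
  rewrite Rmult_0_r, exp_0, !Rmult_1_l. f_equal; f_equal; unfold Rdiv; ring.
Qed.

Lemma zeta_pow_self p : (0 < p)%nat -> Cpow (zeta p) p = C1.
Proof.
  intros Hp. rewrite zeta_pow. replace (2 * PI * INR p / INR p) with (2 * PI).
  - rewrite cos_2PI, sin_2PI. reflexivity.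
  - field. apply not_0_INR. lia.
Qed.

Lemma zeta_pow_neq1 p r : (0 < r < p)%nat -> Cpow (zeta p) r <> C1.
Proof.
  intros H E. rewrite zeta_pow in E. injection E; intros Hs Hc.
  assert (Hp : 0 < INR p) by (apply lt_0_INR; lia).
  assert (Hr : 0 < INR r < INR p) by (split; [apply lt_0_INR | apply lt_INR]; lia).
  pose proof PI_RGT_0.
  set (a := 2 * PI * INR r / INR p) in *.
  assert (0 < a) by (unfold a; apply Rdiv_lt_0_compat; nra).
  assert (a < 2 * PI).
  { unfold a. apply Rmult_lt_reg_r with (INR p); auto.
    replace (2 * PI * INR r / INR p * INR p) with (2 * PI * INR r) by (field; lra). nra. }
  destruct (sin_eq_O_2PI_0 a) as [h|[h|h]]; try lra.
  rewrite h, cos_PI in Hc. lra.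
Qed.

Lemma zeta_pow_eq1 p m : (0 < p)%nat -> Cpow (zeta p) m = C1 -> (m mod p = 0)%nat.
Proof.
  intros Hp E. rewrite (Nat.div_mod_eq m p), Cpow_add, Cpow_mul, zeta_pow_self, Cpow_C1 in E by auto.
  destruct (Nat.eq_dec (m mod p) 0) as [h|h]; auto. exfalso.
  apply (zeta_pow_neq1 p (m mod p)); [split; [lia | apply Nat.mod_upper_bound; lia]|].
  rewrite <- E. field.
Qed.

Lemma prime_gt1 p : Znumtheory.prime (Z.of_nat p) -> (1 < p)%nat.
Proof. intros [H _]. lia. Qed.

Lemma prime_mod_mul p a b : Znumtheory.prime (Z.of_nat p) -> ((a * b) mod p = 0)%nat ->
  (a mod p = 0)%nat \/ (b mod p = 0)%nat.
Proof.
  intros Hp H. pose proof (prime_gt1 p Hp).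
  assert (Hd : (Z.of_nat p | Z.of_nat a * Z.of_nat b)%Z).
  { rewrite <- Nat2Z.inj_mul. apply Nat.Lcm0.mod_divide in H. destruct H as [c Hc].
    exists (Z.of_nat c). rewrite Hc. lia. }
  destruct (prime_mult _ Hp _ _ Hd) as [[c Hc]|[c Hc]]; [left | right];
    apply Nat.Lcm0.mod_divide; exists (Z.to_nat c); lia.
Qed.

Lemma Cprod_one_sub_zeta p k y : Znumtheory.prime (Z.of_nat p) -> (k mod p <> 0)%nat ->
  Cprod_list (map (fun w => Csub C1 (Cmul (Cpow (Cpow (zeta p) k) w) y)) (seq 0 p)) =
  Csub C1 (Cpow y p).
Proof.
  intros hp Hk. pose proof (prime_gt1 p hp).
  apply RootsOfUnity.Cprod_one_sub_root; [lia | |].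
  - rewrite <- Cpow_mul, Nat.mul_comm, Cpow_mul, zeta_pow_self, Cpow_C1 by lia. reflexivity.
  - intros j Hj1 Hj2 E. rewrite <- Cpow_mul in E. apply zeta_pow_eq1 in E; [|lia].
    destruct (prime_mod_mul p k j hp E) as [h|h]; [auto | rewrite Nat.mod_small in h; lia].
Qed.

(** * The level-[p] identity *)

Lemma Cprod_seq_blocks (g : nat -> Cplx) p n : (0 < p)%nat ->
  Cprod_list (map g (seq 1 (p * n))) =
  Cmul (Cprod_list (map (fun w => Cprod_list (map (fun u => g (p * w + S u)%nat) (seq 0 (p - 1)))) (seq 0 n)))
       (Cprod_list (map (fun w => g (p * S w)%nat) (seq 0 n))).
Proof.
  intros Hp. rewrite Cprod_seq_shift, Cprod_seq_mul, <- Cprod_map_mul.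
  apply Cprod_map_ext. intros w _.
  replace (seq 0 p) with (seq 0 (S (p - 1))) by (f_equal; lia).
  rewrite Cprod_seq_S. f_equal; [apply Cprod_map_ext; intros u _|]; f_equal; lia.
Qed.

Lemma jtp_factor_mul_odd p k y : Nat.odd p = true -> jtp_factor (p * k) y = jtp_factor k y.
Proof. intros H. unfold jtp_factor. rewrite Nat.even_mul, <- Nat.negb_odd, H. reflexivity. Qed.

Section LevelP.
Variable p : nat.
Hypothesis hp : Znumtheory.prime (Z.of_nat p).
Hypothesis hodd : Nat.odd p = true.

Lemma Cprod_jtp_factor_zeta k t : (k mod p <> 0)%nat ->
  Cprod_list (map (fun w => jtp_factor k (Cpow (Cmul (Cpow (zeta p) w) t) k)) (seq 0 p)) =
  jtp_factor k (Cpow t (p * k)).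
Proof.
  intros Hk.
  rewrite (Cprod_map_ext _ (fun w => jtp_factor k (Cmul (Cpow (Cpow (zeta p) k) w) (Cpow t k)))).
  2:{ intros w _. rewrite Cpow_mult_distr, <- !Cpow_mul, Nat.mul_comm. reflexivity. }
  rewrite Nat.mul_comm, Cpow_mul. unfold jtp_factor. destruct (Nat.even k).
  - apply Cprod_one_sub_zeta; auto.
  - (* [1 + z y = 1 - z (-y)] and [(-y)^p = -y^p] as [p] is odd *)
    rewrite Cprod_map_mul,
      (Cprod_map_ext _ (fun w => Csub C1 (Cmul (Cpow (Cpow (zeta p) k) w) (Copp (Cpow t k)))))
      by (intros; field).
    rewrite Cprod_one_sub_zeta, Copp_pow_odd by auto. field.
Qed.

Lemma Cprod_jtp_factor_zeta_mult k t :
  Cprod_list (map (fun w => jtp_factor (p * k) (Cpow (Cmul (Cpow (zeta p) w) t) (p * k))) (seq 0 p)) =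
  Cpow (jtp_factor k (Cpow (Cpow t p) k)) p.
Proof.
  pose proof (prime_gt1 p hp).
  rewrite (Cprod_map_ext _ (fun _ => jtp_factor k (Cpow (Cpow t p) k))), Cprod_const, length_seq;
    [reflexivity|].
  intros w _. rewrite jtp_factor_mul_odd by auto. f_equal.
  rewrite Cpow_mult_distr, <- !Cpow_mul. replace (w * (p * k))%nat with (p * (w * k))%nat by lia.
  rewrite Cpow_mul, zeta_pow_self, Cpow_C1 by lia. field.
Qed.

(* The polynomial identity behind the level-[p] identity: pair off the factors of index prime to
   [p] on both sides, those of index [p j] give the remaining ones. *)
Lemma jtp_partial_zeta t n :
  Cmul (jtp_partial n (Cpow (Cpow t p) p))
       (Cprod_list (map (fun w => jtp_partial (p * n) (Cmul (Cpow (zeta p) w) t)) (seq 0 p))) =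
  Cmul (jtp_partial (p * n) (Cpow t p)) (Cpow (jtp_partial n (Cpow t p)) p).
Proof.
  pose proof (prime_gt1 p hp).
  unfold jtp_partial. rewrite Cprod_swap, <- Cprod_map_pow.
  replace (2 * (p * n))%nat with (p * (2 * n))%nat by lia.
  rewrite !(Cprod_seq_blocks _ p (2 * n)) by lia.
  rewrite (Cprod_map_ext (fun w => Cprod_list (map (fun u => Cprod_list (map (fun w' =>
       jtp_factor (p * w + S u) (Cpow (Cmul (Cpow (zeta p) w') t) (p * w + S u))) (seq 0 p))) (seq 0 (p - 1))))
     (fun w => Cprod_list (map (fun u => jtp_factor (p * w + S u) (Cpow (Cpow t p) (p * w + S u))) (seq 0 (p - 1))))).
  2:{ intros w _. apply Cprod_map_ext. intros u Hu. apply in_seq in Hu.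
      rewrite Cprod_jtp_factor_zeta, Cpow_mul; [reflexivity|].
      rewrite Nat.add_comm, Nat.mul_comm, Nat.Div0.mod_add, Nat.mod_small; lia. }
  rewrite (Cprod_map_ext (fun w => Cprod_list (map (fun w' => jtp_factor (p * S w)
       (Cpow (Cmul (Cpow (zeta p) w') t) (p * S w))) (seq 0 p)))
     (fun w => Cpow (jtp_factor (S w) (Cpow (Cpow t p) (S w))) p))
    by (intros; apply Cprod_jtp_factor_zeta_mult).
  rewrite (Cprod_map_ext (fun w => jtp_factor (p * S w) (Cpow (Cpow t p) (p * S w)))
     (fun w => jtp_factor (S w) (Cpow (Cpow (Cpow t p) p) (S w)))).
  2:{ intros w _. rewrite jtp_factor_mul_odd, Cpow_mul by auto. reflexivity. }
  rewrite <- seq_shift, !map_map. field.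
Qed.

End LevelP.

Lemma nome_shift_div p w sigma : (0 < p)%nat ->
  nome (Cscal (/ INR p) (Cadd sigma (INR (2 * w), 0))) = Cmul (Cpow (zeta p) w) (nome (Cscal (/ INR p) sigma)).
Proof.
  intros Hp. assert (INR p <> 0) by (apply not_0_INR; lia).
  unfold nome, zeta. rewrite <- Cexp_scal_nat, <- Cexp_add. f_equal.
  rewrite mult_INR. destruct sigma; unfold Cscal, Cmul_i, Cadd; simpl. f_equal; field; auto.
Qed.

Lemma nome_div p sigma : (0 < p)%nat -> nome sigma = Cpow (nome (Cscal (/ INR p) sigma)) p.
Proof.
  intros Hp. rewrite <- nome_scal_nat. f_equal. assert (INR p <> 0) by (apply not_0_INR; lia).
  destruct sigma; unfold Cscal; simpl. f_equal; field; auto.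
Qed.

Lemma jtp_partial_nome_cv p tau : (0 < p)%nat -> 0 < Cim tau ->
  Ccv (fun M => jtp_partial (p * S M) (nome tau)) (theta3 tau).
Proof.
  intros Hp H.
  pose proof (jtp_partial_cv (nome tau) (theta3 tau) (Cexp_neq0 _) (Cnorm_nome_lt1 tau H)
                (theta_partial_cv tau H)) as T.
  eapply Ccv_ext; [|exact (Ccv_subseq _ _ (fun M => (p * S M - 1)%nat) ltac:(intros; cbv beta; nia) T)].
  intros M. cbv beta. f_equal. nia.
Qed.

Theorem theta3_level_p p sigma : Znumtheory.prime (Z.of_nat p) -> Nat.odd p = true -> 0 < Cim sigma ->
  Cmul (theta3 (Cscal (INR p) sigma))
       (Cprod_list (map (fun w => theta3 (Cscal (/ INR p) (Cadd sigma (INR (2 * w), 0)))) (seq 0 p)))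
  = Cpow (theta3 sigma) (S p).
Proof.
  intros hp hodd Hs. pose proof (prime_gt1 p hp) as Hp1.
  assert (Hp : 0 < INR p) by (apply lt_0_INR; lia).
  set (t := nome (Cscal (/ INR p) sigma)).
  assert (Hs1 : nome sigma = Cpow t p) by (apply nome_div; lia).
  assert (Hsp : nome (Cscal (INR p) sigma) = Cpow (Cpow t p) p) by (rewrite nome_scal_nat, Hs1; reflexivity).
  assert (L1 : Ccv (fun M => jtp_partial (S M) (Cpow (Cpow t p) p)) (theta3 (Cscal (INR p) sigma))).
  { rewrite <- Hsp. eapply Ccv_ext; [intros M; rewrite <- (Nat.mul_1_l (S M)); reflexivity|].
    apply jtp_partial_nome_cv; [lia | unfold Cim, Cscal in *; simpl; nra]. }
  assert (L2 : Ccv (fun M => Cprod_list (map (fun w => jtp_partial (p * S M) (Cmul (Cpow (zeta p) w) t)) (seq 0 p)))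
                   (Cprod_list (map (fun w => theta3 (Cscal (/ INR p) (Cadd sigma (INR (2 * w), 0)))) (seq 0 p)))).
  { apply (Ccv_Cprod (fun M w => jtp_partial (p * S M) (Cmul (Cpow (zeta p) w) t))). intros w _.
    unfold t. rewrite <- nome_shift_div by lia. apply jtp_partial_nome_cv; [lia|].
    unfold Cim, Cscal, Cadd in *; simpl. apply Rmult_lt_0_compat; [apply Rinv_0_lt_compat|]; lra. }
  assert (L3 : Ccv (fun M => jtp_partial (p * S M) (Cpow t p)) (theta3 sigma))
    by (rewrite <- Hs1; apply jtp_partial_nome_cv; auto; lia).
  assert (L4 : Ccv (fun M => jtp_partial (S M) (Cpow t p)) (theta3 sigma)).
  { rewrite <- Hs1. eapply Ccv_ext; [intros M; rewrite <- (Nat.mul_1_l (S M)); reflexivity|].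
    apply jtp_partial_nome_cv; auto; lia. }
  pose proof (Ccv_mul _ _ _ _ L1 L2) as LHS.
  pose proof (Ccv_mul _ _ _ _ L3 (Ccv_pow _ _ p L4)) as RHS.
  eapply Ccv_ext in LHS; [|intros M; apply jtp_partial_zeta; auto].
  rewrite (Ccv_unique _ _ _ LHS RHS). simpl. field.
Qed.

(** * Iterating the level-[p] identity *)

Definition shift_arg (p j v : nat) (sigma : Cplx) : Cplx :=
  Cscal (/ INR (p ^ j)) (Cadd sigma (INR (2 * v), 0)).

Definition theta_shift_prod (p j : nat) (sigma : Cplx) : Cplx :=
  Cprod_list (map (fun v => theta3 (shift_arg p j v sigma)) (seq 0 (p ^ j))).

Fixpoint repunit (p j : nat) : nat := match j with O => O | S k => (repunit p k * p + 1)%nat end.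

Lemma repunit_add_pow p j : (repunit p (S j) = repunit p j + p ^ j)%nat.
Proof. induction j; [simpl; lia|]. cbn [repunit] in *. rewrite IHj, Nat.pow_succ_r'. lia. Qed.

Lemma Cim_Cscal r z : Cim (Cscal r z) = r * Cim z.
Proof. reflexivity. Qed.

Section Iteration.
Variable p : nat.
Hypothesis hp : Znumtheory.prime (Z.of_nat p).
Hypothesis hodd : Nat.odd p = true.

Lemma INR_pow_pos j : 0 < INR (p ^ j).
Proof. pose proof (prime_gt1 p hp). apply lt_0_INR, Nat.neq_0_lt_0, Nat.pow_nonzero. lia. Qed.

Lemma Cim_shift_arg j v sigma : 0 < Cim sigma -> 0 < Cim (shift_arg p j v sigma).
Proof.
  intros H. unfold shift_arg. rewrite Cim_Cscal. unfold Cim, Cadd in *; simpl. rewrite Rplus_0_r.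
  apply Rmult_lt_0_compat; [apply Rinv_0_lt_compat, INR_pow_pos | auto].
Qed.

Lemma shift_arg_S j u w sigma :
  shift_arg p (S j) (p ^ j * w + u) sigma = Cscal (/ INR p) (Cadd (shift_arg p j u sigma) (INR (2 * w), 0)).
Proof.
  unfold shift_arg. pose proof (INR_pow_pos 1). pose proof (INR_pow_pos j). rewrite Nat.pow_1_r in *.
  rewrite !mult_INR, plus_INR, mult_INR, Nat.pow_succ_r', mult_INR.
  destruct sigma; unfold Cscal, Cadd; simpl. f_equal; field; lra.
Qed.

Lemma shift_arg_S_mul j u sigma :
  shift_arg p (S j) (p * u) (Cscal (INR p) sigma) = shift_arg p j u sigma.
Proof.
  unfold shift_arg. pose proof (INR_pow_pos 1). pose proof (INR_pow_pos j). rewrite Nat.pow_1_r in *.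
  rewrite Nat.pow_succ_r', !mult_INR. destruct sigma; unfold Cscal, Cadd; simpl. f_equal; field; lra.
Qed.

Lemma theta_shift_prod_0 sigma : theta_shift_prod p 0 sigma = theta3 sigma.
Proof.
  unfold theta_shift_prod, shift_arg. simpl. replace (Cscal (/ 1) (Cadd sigma (0, 0))) with sigma.
  - unfold Cprod_list; simpl. field.
  - destruct sigma; unfold Cscal, Cadd; simpl. f_equal; field.
Qed.

Lemma theta_shift_prod_neq0 j sigma : 0 < Cim sigma -> theta_shift_prod p j sigma <> C0.
Proof.
  intros H. apply Cprod_neq0. intros z Hz. apply in_map_iff in Hz. destruct Hz as [v [<- _]].
  apply theta3_neq0, Cim_shift_arg, H.
Qed.

(* Grouping [v = p^j w + u] and applying the level-[p] identity at each [shift_arg p j u sigma]. *)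
Lemma theta_shift_prod_S j sigma : 0 < Cim sigma ->
  Cmul (theta_shift_prod p (S j) sigma)
       (Cprod_list (map (fun u => theta3 (Cscal (INR p) (shift_arg p j u sigma))) (seq 0 (p ^ j)))) =
  Cpow (theta_shift_prod p j sigma) (S p).
Proof.
  intros H. unfold theta_shift_prod. rewrite Nat.pow_succ_r', Nat.mul_comm, Cprod_seq_mul.
  rewrite (Cprod_map_ext _ (fun w => Cprod_list (map (fun u =>
             theta3 (Cscal (/ INR p) (Cadd (shift_arg p j u sigma) (INR (2 * w), 0)))) (seq 0 (p ^ j))))).
  2:{ intros w _. apply Cprod_map_ext. intros u _. rewrite shift_arg_S. reflexivity. }
  rewrite Cprod_swap, <- Cprod_map_mul, <- Cprod_map_pow. apply Cprod_map_ext. intros u _.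
  rewrite <- (theta3_level_p p _ hp hodd (Cim_shift_arg j u sigma H)). field.
Qed.

Lemma theta_shift_prod_ratio j sigma : 0 < Cim sigma ->
  Cmul (theta_shift_prod p (S j) sigma) (theta3 (Cscal (INR p) sigma)) =
  Cmul (Cpow (theta_shift_prod p j sigma) p) (theta3 sigma).
Proof.
  intros H. induction j.
  - pose proof (theta_shift_prod_S 0 sigma H) as E. rewrite theta_shift_prod_0 in *.
    unfold Cprod_list, shift_arg in E; simpl in E.
    replace (Cscal (/ 1) (Cadd sigma (0, 0))) with sigma in E
      by (destruct sigma; unfold Cscal, Cadd; simpl; f_equal; field).
    transitivity (Cmul (theta3 sigma) (Cpow (theta3 sigma) p)); [rewrite <- E|]; field.
  - (* for [j >= 1] the level-[p] factors are [p]-th powers of the previous level *)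
    pose proof (theta_shift_prod_S (S j) sigma H) as E.
    rewrite Nat.pow_succ_r', Nat.mul_comm, Cprod_seq_mul in E.
    rewrite (Cprod_map_ext _ (fun _ => theta_shift_prod p j sigma)), Cprod_const, length_seq in E.
    2:{ intros w _. apply Cprod_map_ext. intros u _.
        rewrite <- (theta3_shift_even (shift_arg p j u sigma) w). f_equal. unfold shift_arg.
        pose proof (INR_pow_pos 1). pose proof (INR_pow_pos j). rewrite Nat.pow_1_r in *.
        rewrite Nat.pow_succ_r', !mult_INR, plus_INR, mult_INR.
        destruct sigma; unfold Cscal, Cadd; simpl. f_equal; field; lra. }
    apply (Cmul_cancel_l (Cpow (theta_shift_prod p j sigma) p));
      [apply Cpow_neq0, theta_shift_prod_neq0, H|].
    transitivity (Cmul (Cmul (theta_shift_prod p (S (S j)) sigma) (Cpow (theta_shift_prod p j sigma) p))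
                       (theta3 (Cscal (INR p) sigma))); [field|].
    rewrite E. cbn [Cpow].
    transitivity (Cmul (Cpow (theta_shift_prod p (S j) sigma) p)
                       (Cmul (theta_shift_prod p (S j) sigma) (theta3 (Cscal (INR p) sigma))));
      [field | rewrite IHj; field].
Qed.

Theorem theta_shift_prod_closed j sigma : 0 < Cim sigma ->
  Cmul (theta_shift_prod p j sigma) (Cpow (theta3 (Cscal (INR p) sigma)) (repunit p j)) =
  Cpow (theta3 sigma) (repunit p (S j)).
Proof.
  intros H. induction j.
  - rewrite theta_shift_prod_0. cbn [repunit]. rewrite Nat.mul_0_l. simpl. field.
  - change (repunit p (S ?k)) with (repunit p k * p + 1)%nat.
    rewrite !Cpow_add, !Cpow_mul, !Cpow_1, <- IHj, Cpow_mult_distr.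
    set (B := theta3 (Cscal (INR p) sigma)).
    transitivity (Cmul (Cmul (theta_shift_prod p (S j) sigma) B) (Cpow (Cpow B (repunit p j)) p));
      [field|].
    unfold B. rewrite theta_shift_prod_ratio by auto. field.
Qed.

End Iteration.

Lemma rel_prime_prime_pow p v a : Znumtheory.prime (Z.of_nat p) -> (v mod p <> 0)%nat ->
  rel_prime (Z.of_nat v) (Z.of_nat (p ^ a)).
Proof.
  intros hp Hv. pose proof (prime_gt1 p hp).
  assert (Hp : rel_prime (Z.of_nat v) (Z.of_nat p)).
  { apply rel_prime_sym, prime_rel_prime; auto. intros [k Hk]. apply Hv.
    apply Nat.Lcm0.mod_divide. exists (Z.to_nat k). nia. }
  induction a; [apply rel_prime_sym, rel_prime_1|].
  rewrite Nat.pow_succ_r', Nat2Z.inj_mul. apply rel_prime_mult; auto.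
Qed.

Lemma Nat_gcd_rel_prime x y : rel_prime (Z.of_nat x) (Z.of_nat y) -> Nat.gcd x y = 1%nat.
Proof.
  intros [_ _ H].
  assert (Hdiv : forall a b, Nat.divide a b -> (Z.of_nat a | Z.of_nat b)%Z)
    by (intros a b [k ->]; exists (Z.of_nat k); apply Nat2Z.inj_mul).
  specialize (H _ (Hdiv _ _ (Nat.gcd_divide_l x y)) (Hdiv _ _ (Nat.gcd_divide_r x y))).
  apply Z.divide_1_r_nonneg in H; lia.
Qed.

Lemma gcd_prime_pow_eqb p a b v : Znumtheory.prime (Z.of_nat p) -> (1 <= a)%nat -> (1 <= b)%nat ->
  Nat.eqb (Nat.gcd (Nat.gcd (p ^ a) v) (p ^ b)) 1 = negb (Nat.eqb (v mod p) 0).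
Proof.
  intros hp Ha Hb. pose proof (prime_gt1 p hp).
  assert (Hpow : forall c, (1 <= c)%nat -> Nat.divide p (p ^ c))
    by (intros c Hc; exists (p ^ (c - 1))%nat; rewrite Nat.mul_comm, <- Nat.pow_succ_r'; f_equal; lia).
  destruct (Nat.eqb_spec (v mod p) 0) as [h|h]; simpl.
  - apply Nat.eqb_neq. intros E.
    assert (D : Nat.divide p (Nat.gcd (Nat.gcd (p ^ a) v) (p ^ b)))
      by (repeat apply Nat.gcd_greatest; auto; apply Nat.Lcm0.mod_divide; auto).
    rewrite E in D. apply Nat.divide_1_r in D. lia.
  - apply Nat.eqb_eq. rewrite Nat.gcd_comm, (Nat_gcd_rel_prime _ _ (rel_prime_sym _ _ (rel_prime_prime_pow p v a hp h))).
    apply Nat.divide_1_r, Nat.gcd_divide_r.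
Qed.

Lemma Cprod_seq_mod_split (g : nat -> Cplx) p n : (0 < p)%nat ->
  Cprod_list (map g (seq 0 (p * n))) =
  Cmul (Cprod_list (map g (filter (fun v => negb (Nat.eqb (v mod p) 0)) (seq 0 (p * n)))))
       (Cprod_list (map (fun u => g (p * u)%nat) (seq 0 n))).
Proof.
  intros Hp. rewrite Cprod_filter.
  set (P := fun v => negb (Nat.eqb (v mod p) 0)).
  rewrite (Cprod_map_ext g (fun v => Cmul (if P v then g v else C1) (if P v then C1 else g v)))
    by (intros v _; destruct (P v); field).
  rewrite Cprod_map_mul. f_equal.
  rewrite Cprod_seq_mul. apply Cprod_map_ext. intros u _.
  replace (seq 0 p) with (seq 0 (S (p - 1))) by (f_equal; lia).
  rewrite Cprod_seq_succ, (Cprod_map_ext _ (fun _ => C1)), Cprod_const, Cpow_C1.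
  - unfold P. rewrite Nat.add_0_r, Nat.mul_comm, Nat.Div0.mod_mul. simpl. field.
  - intros r Hr. apply in_seq in Hr. unfold P.
    rewrite Nat.add_comm, Nat.mul_comm, Nat.Div0.mod_add, Nat.mod_small by lia. reflexivity.
Qed.

Section Assembly.
Variable p : nat.
Hypothesis hp : Znumtheory.prime (Z.of_nat p).
Hypothesis hodd : Nat.odd p = true.
Variable l : nat.
Variable tau : Cplx.
Hypothesis htau : 0 < Cim tau.

Let sigma (k : nat) : Cplx := Cscal (INR (p ^ k)) tau.
Let T (k : nat) : Cplx := theta3 (sigma k).

Lemma Cim_sigma k : 0 < Cim (sigma k).
Proof. unfold sigma. rewrite Cim_Cscal. apply Rmult_lt_0_compat; [apply INR_pow_pos|]; auto. Qed.

Lemma theta_shift_prod_sigma j k :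
  Cmul (theta_shift_prod p j (sigma k)) (Cpow (T (S k)) (repunit p j)) = Cpow (T k) (repunit p (S j)).
Proof.
  unfold T. replace (sigma (S k)) with (Cscal (INR p) (sigma k)).
  - apply theta_shift_prod_closed, Cim_sigma; auto.
  - unfold sigma. rewrite Nat.pow_succ_r', mult_INR. destruct tau; unfold Cscal; simpl. f_equal; ring.
Qed.

Lemma inner_prod_full j :
  (forall v, In v (seq 0 (p ^ j)) -> Nat.eqb (Nat.gcd (Nat.gcd (p ^ (l - j)) v) (p ^ j)) 1 = true) ->
  inner_prod p l j tau = theta_shift_prod p j (sigma (l - j)).
Proof. intros H. unfold inner_prod. rewrite forallb_filter_id; [reflexivity|]. apply forallb_forall, H. Qed.

Lemma inner_prod_first : inner_prod p l 0 tau = T l.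
Proof.
  rewrite inner_prod_full, theta_shift_prod_0, Nat.sub_0_r; [reflexivity|].
  intros v _. apply Nat.eqb_eq, Nat.divide_1_r, Nat.gcd_divide_r.
Qed.

Lemma inner_prod_last : inner_prod p l l tau = theta_shift_prod p l (sigma 0).
Proof.
  rewrite inner_prod_full, Nat.sub_diag; [reflexivity|].
  intros v _. apply Nat.eqb_eq. rewrite Nat.sub_diag. simpl (p ^ 0)%nat.
  rewrite (Nat.divide_1_r _ (Nat.gcd_divide_l 1 v)). apply Nat.divide_1_r, Nat.gcd_divide_l.
Qed.

(* In the middle range the missing terms [v = p u] form the previous level, one step further up. *)
Lemma inner_prod_mid i : (i + 2 <= l)%nat ->
  Cmul (inner_prod p l (S i) tau) (theta_shift_prod p i (sigma (l - i - 2))) =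
  theta_shift_prod p (S i) (sigma (l - S i)).
Proof.
  intros Hi. pose proof (prime_gt1 p hp).
  unfold inner_prod, theta_shift_prod at 2.
  rewrite (Nat.pow_succ_r' p i), Cprod_seq_mod_split by lia. f_equal.
  - do 2 f_equal. apply filter_ext. intros v. apply (gcd_prime_pow_eqb p (l - S i) (S i)); auto; lia.
  - apply Cprod_map_ext. intros u _. f_equal.
    replace (sigma (l - S i)) with (Cscal (INR p) (sigma (l - i - 2))).
    + symmetry. apply shift_arg_S_mul; auto.
    + unfold sigma. replace (l - S i)%nat with (S (l - i - 2)) by lia.
      rewrite Nat.pow_succ_r', mult_INR. destruct tau; unfold Cscal; simpl. f_equal; ring.
Qed.

Lemma outer_prod_partial m : (m + 1 <= l)%nat ->
  Cmul (Cprod_list (map (fun j => inner_prod p l j tau) (seq 0 (S m)))) (Cpow (T (l - m - 1)) (repunit p m)) =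
  Cpow (T (l - m)) (repunit p (S m)).
Proof.
  induction m; intros Hm.
  - rewrite Nat.sub_0_r. simpl. rewrite inner_prod_first. simpl. field.
  - rewrite (Cprod_seq_S _ 0 (S m)). simpl (0 + S m)%nat.
    set (k := (l - S m - 1)%nat). replace (l - S m)%nat with (S k) by lia.
    pose proof (IHm ltac:(lia)) as IH.
    replace (l - m - 1)%nat with (S k) in IH by lia. replace (l - m)%nat with (S (S k)) in IH by lia.
    pose proof (inner_prod_mid m ltac:(lia)) as Mid.
    replace (l - m - 2)%nat with k in Mid by lia. replace (l - S m)%nat with (S k) in Mid by lia.
    rewrite <- (theta_shift_prod_sigma (S m) (S k)), <- Mid, <- IH, <- (theta_shift_prod_sigma m k).
    field.
Qed.

End Assembly.

Theorem lemma2p3 (p l : nat) (hp : Znumtheory.prime (Z.of_nat p))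
  (hodd : Nat.odd p = true) (hl : (1 <= l)%nat) (tau : Cplx) (htau : 0 < Cim tau) :
  outer_prod p l tau = Cpow (theta3 tau) (psi_pp p l).
Proof.
  destruct l as [|m]; [lia|].
  set (A := theta3 (Cscal (INR (p ^ 0)) tau)). set (B := theta3 (Cscal (INR (p ^ 1)) tau)).
  assert (HA : A = theta3 tau) by (unfold A; f_equal; destruct tau; unfold Cscal; simpl; f_equal; ring).
  pose proof (outer_prod_partial p hp hodd (S m) tau htau m ltac:(lia)) as Hfirst.
  pose proof (theta_shift_prod_sigma p hp hodd tau htau (S m) 0) as Hlast.
  pose proof (inner_prod_last p (S m) tau) as Hl.
  cbv beta in Hfirst, Hlast, Hl. rewrite <- Hl in Hlast.
  replace (S m - m - 1)%nat with 0%nat in Hfirst by lia. replace (S m - m)%nat with 1%nat in Hfirst by lia.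
  fold A B in Hfirst, Hlast.
  unfold outer_prod. rewrite (Cprod_seq_S _ 0 (S m)). simpl (0 + S m)%nat.
  apply (Cmul_cancel_l (Cmul (Cpow A (repunit p m)) (Cpow B (repunit p (S m))))).
  { apply Cmul_neq0; apply Cpow_neq0; apply theta3_neq0; [unfold A | unfold B];
      rewrite Cim_Cscal; apply Rmult_lt_0_compat; auto; apply INR_pow_pos; auto. }
  transitivity (Cmul (Cmul (Cprod_list (map (fun j => inner_prod p (S m) j tau) (seq 0 (S m)))) (Cpow A (repunit p m)))
                     (Cmul (inner_prod p (S m) (S m) tau) (Cpow B (repunit p (S m))))); [field|].
  rewrite Hfirst, Hlast, <- HA.
  replace (repunit p (S (S m))) with (repunit p m + psi_pp p (S m))%nat.
  - rewrite Cpow_add. field.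
  - unfold psi_pp. rewrite !repunit_add_pow. replace (S m - 1)%nat with m by lia. lia.
Qed.
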